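(* Let $N\ge1$ be an integer, $k>0$, $r>0$, $\alpha>0$ with $\alpha/r<\mu^*$. Let $\widetilde U^{\mathrm{eq}}=(x^{\mathrm{eq}},M_0^{\mathrm{eq}},M_1^{\mathrm{eq}},\dots)\in X_+$ be an equilibrium of the infinite system (S) below such that the corresponding equilibrium $U^{\mathrm{eq}}=(x^{\mathrm{eq}},u^{\mathrm{eq}},v^{\mathrm{eq}},w^{\mathrm{eq}},M_0^{\mathrm{eq}},\dots,M_N^{\mathrm{eq}})$ of the $(N+5)$-dimensional system $\dot U=F(U)$ is locally exponentially asymptotically stable. Then every solution $\widetilde U(t)$ of (S) that converges to $\widetilde U^{\mathrm{eq}}$ in the strong topology of $X$ as $t\to+\infty$ does so at an exponential rate, i.e. $\|\widetilde U(t)-\widetilde U^{\mathrm{eq}}\|\le Ce^{-\gamma t}$ for some $C,\gamma>0$ and all $t\ge0$.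
   Context: System (S): for $t\ge0$, $\dot M_0=r-kxM_0-M_0$, $\dot M_i=kxM_{i-1}-kxM_i-M_i$ ($i\ge1$), $\dot x=\alpha-kx\sum_{i=0}^\infty M_i+\sum_{i=N+1}^\infty iM_i$. $X$ is the Banach space of real sequences $(x,M_0,M_1,\dots)$ with norm $\|(x,M_0,M_1,\dots)\|=|x|+\sum_{i\ge0}(i+1)|M_i|<\infty$, and $X_+$ its nonnegative cone; solutions of (S) are the nonnegative solutions with values in $X_+$. To $(x,M_0,M_1,\dots)\in X_+$ corresponds $(x,u,v,w,M_0,\dots,M_N)\in\mathbb{R}^{N+5}$ with $u=\sum_{i\ge0}M_i$, $v=\sum_{i\ge N+1}iM_i$, $w=\sum_{i\ge N}M_i$. The map $F:\mathbb{R}^{N+5}\to\mathbb{R}^{N+5}$ (variables $U_1=x,U_2=u,U_3=v,U_4=w,U_{5+i}=M_i$) is $F_1=\alpha+U_3-kU_1U_2$, $F_2=r-U_2$, $F_3=-U_3+kU_1U_4+NkU_1U_{N+5}$, $F_4=-U_4+kU_1U_{N+4}$, $F_5=r-U_5-kU_1U_5$, $F_j=-U_j+kU_1U_{j-1}-kU_1U_j$ ($6\le j\le N+5$). Finally $\mu^*:=\widetilde{\mathcal F}_N(y^* )$, where $\widetilde{\mathcal F}_N(y)=\frac{y}{1-y}(1-(N+1)y^N+Ny^{N+1})$ and $y^*$ is the unique zero in $(0,1)$ of $p_N(y)=1-(N+1)^2y^N+N(2N+3)y^{N+1}-N(N+1)y^{N+2}$. *)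

From Stdlib Require Import Reals Lra Lia.
From Coquelicot Require Import Coquelicot.
Open Scope R_scope.

Definition pN (N : nat) (y : R) : R :=
  1 - (INR N + 1) ^ 2 * y ^ N + INR N * (2 * INR N + 3) * y ^ (N + 1)
    - INR N * (INR N + 1) * y ^ (N + 2).

Definition FtildeN (N : nat) (y : R) : R :=
  y / (1 - y) * (1 - (INR N + 1) * y ^ N + INR N * y ^ (N + 1)).

(* An element of X is a pair (x, M) with M : nat -> R the sequence M_0, M_1, ... *)
Definition inX (M : nat -> R) : Prop :=
  ex_series (fun i => (INR i + 1) * Rabs (M i)).

Definition inXplus (x : R) (M : nat -> R) : Prop :=
  0 <= x /\ (forall i, 0 <= M i) /\ inX M.

Definition distX (x : R) (M : nat -> R) (x' : R) (M' : nat -> R) : R :=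
  Rabs (x - x') + Series (fun i => (INR i + 1) * Rabs (M i - M' i)).

Definition sumM (M : nat -> R) : R := Series M.
Definition sumiM_tail (N : nat) (M : nat -> R) : R :=
  Series (fun j => INR (j + N + 1) * M (j + N + 1)%nat).
Definition sumM_tail (N : nat) (M : nat -> R) : R :=
  Series (fun j => M (j + N)%nat).

Definition rhs_x (N : nat) (k alpha : R) (x : R) (M : nat -> R) : R :=
  alpha - k * x * sumM M + sumiM_tail N M.

Definition rhs_M (k r : R) (x : R) (M : nat -> R) (i : nat) : R :=
  match i with
  | O => r - k * x * M O - M O
  | S j => k * x * M j - k * x * M (S j) - M (S j)
  end.

Definition is_equilibrium_S (N : nat) (k r alpha : R) (x : R) (M : nat -> R) : Prop :=
  inXplus x M /\ rhs_x N k alpha x M = 0 /\ (forall i, rhs_M k r x M i = 0).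

Definition is_solution_S (N : nat) (k r alpha : R)
    (x : R -> R) (M : R -> nat -> R) : Prop :=
  (forall t, 0 <= t -> inXplus (x t) (M t)) /\
  (forall t0, 0 <= t0 -> forall eps, 0 < eps -> exists delta, 0 < delta /\
     forall t, 0 <= t -> Rabs (t - t0) < delta ->
       distX (x t) (M t) (x t0) (M t0) < eps) /\
  (forall t, 0 < t -> is_derive x t (rhs_x N k alpha (x t) (M t))) /\
  (forall t, 0 < t -> forall i,
       is_derive (fun s => M s i) t (rhs_M k r (x t) (M t) i)).

(* Vectors of R^(N+5) are represented by U : nat -> R using the coordinates
   U 1, ..., U (N+5) (1-based, as in the paper); other coordinates are ignored. *)
Definition Fvec (N : nat) (k r alpha : R) (U : nat -> R) (j : nat) : R :=
  match j with
  | 1%nat => alpha + U 3%nat - k * U 1%nat * U 2%nat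
  | 2%nat => r - U 2%nat
  | 3%nat => - U 3%nat + k * U 1%nat * U 4%nat + INR N * k * U 1%nat * U (N + 5)%nat
  | 4%nat => - U 4%nat + k * U 1%nat * U (N + 4)%nat
  | 5%nat => r - U 5%nat - k * U 1%nat * U 5%nat
  | _ => - U j + k * U 1%nat * U (j - 1)%nat - k * U 1%nat * U j
  end.

Definition distF (N : nat) (U V : nat -> R) : R :=
  sum_f_R0 (fun j => Rabs (U (S j) - V (S j))) (N + 4).

Definition in_coords (N j : nat) : Prop := (1 <= j <= N + 5)%nat.

Definition is_solution_F (N : nat) (k r alpha : R) (U : R -> nat -> R) : Prop :=
  (forall j, in_coords N j -> forall eps, 0 < eps -> exists delta, 0 < delta /\
     forall t, 0 <= t < delta -> Rabs (U t j - U 0 j) < eps) /\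
  (forall t, 0 < t -> forall j, in_coords N j ->
     is_derive (fun s => U s j) t (Fvec N k r alpha (U t) j)).

Definition loc_exp_stable (N : nat) (k r alpha : R) (Ueq : nat -> R) : Prop :=
  (forall j, in_coords N j -> Fvec N k r alpha Ueq j = 0) /\
  exists delta C gamma, 0 < delta /\ 0 < C /\ 0 < gamma /\
   (forall U0 : nat -> R, distF N U0 Ueq < delta ->
      exists U, is_solution_F N k r alpha U /\
                (forall j, in_coords N j -> U 0 j = U0 j)) /\
   (forall U, is_solution_F N k r alpha U -> distF N (U 0) Ueq < delta ->
      forall t, 0 <= t ->
        distF N (U t) Ueq <= C * exp (- gamma * t) * distF N (U 0) Ueq).

(* the equilibrium of the finite system corresponding to (x, M) in X_+:
   (x, u, v, w, M_0, ..., M_N) at coordinates 1, 2, 3, 4, 5, ..., N+5 *)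
Definition reduce (N : nat) (x : R) (M : nat -> R) : nat -> R :=
  fun j => match j with
  | 1%nat => x
  | 2%nat => sumM M
  | 3%nat => sumiM_tail N M
  | 4%nat => sumM_tail N M
  | _ => M (j - 5)%nat
  end.

(* The quantities (x, u, v, w, M_0, ..., M_N) of a solution of (S) solve the closed finite
   system U' = F(U).  Once a converging solution is close to the equilibrium, local exponential
   stability of that system makes x, u, v, w and M_0, ..., M_N converge at some rate g.  Each
   M_i then solves M_i' = -(1 + k x) M_i + k x M_(i-1), a damped equation forced by
   M_(i-1) - Meq_(i-1) and x - xeq, and a barrier argument bounds |M_i - Meq_i| by B e^(-g t)
   uniformly in i.  The norm of X is finally split at an index n growing linearly in t: the head
   costs a factor n^2, the tail of M is controlled by v + w - M_N = sum_(i > N) (i + 1) M_i, and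
   the tail of the equilibrium, which is geometric, by q^n; the rate g/2 survives. *)

From Stdlib Require Import Reals Lra Lia.
From Coquelicot Require Import Coquelicot.
Open Scope R_scope.

(** * Partial sums and series *)

(* The sum of the [m] first terms; Coquelicot's [sum_n a m] has [m + 1] terms. *)
Fixpoint psum (a : nat -> R) (m : nat) : R :=
  match m with O => 0 | S m' => psum a m' + a m' end.

Lemma psum_le a b m : (forall j, (j < m)%nat -> a j <= b j) -> psum a m <= psum b m.
Proof.
  induction m as [|m IH]; intros H; simpl; [lra|].
  assert (psum a m <= psum b m) by auto. assert (a m <= b m) by auto. lra.
Qed.

Lemma psum_plus a b m : psum (fun j => a j + b j) m = psum a m + psum b m.
Proof. induction m; simpl; lra. Qed.

Lemma psum_minus a b m : psum (fun j => a j - b j) m = psum a m - psum b m.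
Proof. induction m; simpl; lra. Qed.

Lemma psum_scal c a m : psum (fun j => c * a j) m = c * psum a m.
Proof. induction m as [|m IH]; simpl; try rewrite IH; ring. Qed.

Lemma psum_abs a m : Rabs (psum a m) <= psum (fun j => Rabs (a j)) m.
Proof.
  induction m; simpl; [rewrite Rabs_R0; lra|].
  eapply Rle_trans; [apply Rabs_triang|lra].
Qed.

Lemma psum_nonneg a m : (forall j, 0 <= a j) -> 0 <= psum a m.
Proof. intros H; induction m; simpl; [lra|]. specialize (H m); lra. Qed.

Lemma psum_le_const a m c : (forall j, (j < m)%nat -> a j <= c) -> psum a m <= INR m * c.
Proof.
  induction m as [|m IH]; intros H; simpl psum; [simpl; lra|].
  rewrite S_INR. assert (psum a m <= INR m * c) by auto. assert (a m <= c) by auto. lra.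
Qed.

Lemma psum_sum_n a m : psum a (S m) = sum_n a m.
Proof.
  induction m as [|m IH]; [simpl; rewrite sum_O; lra|].
  rewrite sum_Sn, <- IH. reflexivity.
Qed.

Lemma is_lim_psum a : ex_series a -> is_lim_seq (psum a) (Series a).
Proof.
  intros H. apply is_lim_seq_incr_1, (is_lim_seq_ext (sum_n a)).
  - intros n; rewrite psum_sum_n; auto.
  - exact (Series_correct _ H).
Qed.

Lemma Series_of_lim_psum a (l : R) : is_lim_seq (psum a) l -> Series a = l.
Proof.
  intros H. apply is_series_unique. apply is_lim_seq_incr_1 in H.
  assert (L : is_lim_seq (sum_n a) l).
  { eapply is_lim_seq_ext; [|exact H]. intros; apply psum_sum_n. }
  exact L.
Qed.

Lemma ex_series_dom a b : (forall n, Rabs (a n) <= b n) -> ex_series b -> ex_series a.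
Proof. intros H E. apply (ex_series_le a b); auto. Qed.

Lemma ex_series_shift (a : nat -> R) m : ex_series a -> ex_series (fun j => a (j + m)%nat).
Proof.
  intros H. apply (ex_series_incr_n a m) in H.
  eapply ex_series_ext; [|exact H]. intros n; simpl. rewrite Nat.add_comm; auto.
Qed.

Lemma Series_split a m : ex_series a -> Series a = psum a m + Series (fun j => a (j + m)%nat).
Proof.
  intros H. induction m as [|m IH].
  - simpl. rewrite Rplus_0_l. apply Series_ext. intros; rewrite Nat.add_0_r; auto.
  - rewrite IH, Series_incr_1 by (apply ex_series_shift; auto). simpl.
    rewrite (Series_ext (fun k => a (S (k + m))) (fun j => a (j + S m)%nat)); [ring|].
    intros; f_equal; lia.
Qed.

Lemma Series_nonneg a : (forall j, 0 <= a j) -> ex_series a -> 0 <= Series a.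
Proof.
  intros H E. rewrite <- (Rmult_0_l (Series a)), <- Series_scal_l.
  apply Series_le; auto. intros n; specialize (H n); lra.
Qed.

Lemma Series_shift_nonneg a m : (forall j, 0 <= a j) -> ex_series a ->
  0 <= Series (fun j => a (j + m)%nat).
Proof. intros H E. apply Series_nonneg; auto. apply ex_series_shift; auto. Qed.

Lemma psum_le_Series a m : (forall j, 0 <= a j) -> ex_series a -> psum a m <= Series a.
Proof.
  intros H E. rewrite (Series_split a m E). pose proof (Series_shift_nonneg a m H E). lra.
Qed.

Lemma term_le_Series a i : (forall j, 0 <= a j) -> ex_series a -> a i <= Series a.
Proof.
  intros H E. eapply Rle_trans; [|apply (psum_le_Series a (S i)); auto].
  simpl. pose proof (psum_nonneg a i H). lra.
Qed.

Lemma Series_shift_le a m : (forall j, 0 <= a j) -> ex_series a ->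
  Series (fun j => a (j + m)%nat) <= Series a.
Proof. intros H E. rewrite (Series_split a m E). pose proof (psum_nonneg a m H). lra. Qed.

Lemma Series_abs_le_of_psum a c : ex_series a -> (forall m, Rabs (psum a m) <= c) ->
  Rabs (Series a) <= c.
Proof.
  intros E H. assert (L := is_lim_seq_abs _ _ (is_lim_psum a E)).
  apply (is_lim_seq_le _ _ _ _ H L (is_lim_seq_const c)).
Qed.

Lemma Series_tail_small a : ex_series a -> forall eps, 0 < eps ->
  exists n0, forall n, (n0 <= n)%nat -> Rabs (Series (fun j => a (j + n)%nat)) < eps.
Proof.
  intros E eps He. assert (L := is_lim_psum a E). apply is_lim_seq_spec in L.
  destruct (L (mkposreal eps He)) as [n0 Hn0].
  exists n0. intros n Hn. specialize (Hn0 n Hn). simpl in Hn0.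
  rewrite (Series_split a n E), Rabs_minus_sym in Hn0.
  replace (psum a n + Series (fun j => a (j + n)%nat) - psum a n)
    with (Series (fun j => a (j + n)%nat)) in Hn0 by ring. exact Hn0.
Qed.

(** * Real analysis *)

Lemma exp_le_exp x y : x <= y -> exp x <= exp y.
Proof. intros [H| ->]; [apply Rlt_le, exp_increasing; auto|apply Rle_refl]. Qed.

Lemma derivable_pt_lim_psum (f g : nat -> R -> R) m s :
  (forall i, (i < m)%nat -> derivable_pt_lim (f i) s (g i s)) ->
  derivable_pt_lim (fun y => psum (fun i => f i y) m) s (psum (fun i => g i s) m).
Proof.
  induction m as [|m IH]; intros H; simpl; [apply derivable_pt_lim_const|].
  apply (derivable_pt_lim_plus (fun y => psum (fun i => f i y) m) (f m)); auto.
Qed.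

Lemma Series_diff_quotient_le (f g : nat -> R -> R) t h d K :
  0 < Rabs h < d ->
  (forall c, Rabs (c - t) < d -> forall i, derivable_pt_lim (f i) c (g i c)) ->
  (forall c, Rabs (c - t) < d -> forall m, psum (fun i => Rabs (g i c)) m <= K) ->
  ex_series (fun i => f i t) -> ex_series (fun i => f i (t + h)) ->
  Rabs ((Series (fun i => f i (t + h)) - Series (fun i => f i t)) / h) <= K.
Proof.
  intros Hh HD HK Et Eth.
  assert (Hlip : Rabs (Series (fun i => f i (t + h)) - Series (fun i => f i t)) <= K * Rabs h).
  { replace (Rabs h) with (Rabs (t + h - t)) by (f_equal; ring).
    rewrite <- Series_minus by auto. apply Series_abs_le_of_psum.
    { apply (ex_series_minus (fun i => f i (t + h)) (fun i => f i t)); auto. }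
    intros m. rewrite psum_minus.
    apply (bounded_variation (fun y => psum (fun i => f i y) m) (fun y => psum (fun i => g i y) m)).
    intros c Hc. replace (t + h - t) with h in Hc by ring. split.
    - apply is_derive_Reals, derivable_pt_lim_psum. intros i _. apply HD; lra.
    - eapply Rle_trans; [apply psum_abs|apply HK; lra]. }
  unfold Rdiv. rewrite Rabs_mult, Rabs_inv.
  apply (Rmult_le_reg_r (Rabs h)); [lra|].
  rewrite Rmult_assoc, Rinv_l; lra.
Qed.

(* Termwise differentiation, assuming only that the tails of the derived series are small
   uniformly near [t] (no summable majorant). *)
Lemma derivable_pt_lim_Series (f g : nat -> R -> R) t d0 :
  0 < d0 ->
  (forall i s, Rabs (s - t) < d0 -> derivable_pt_lim (f i) s (g i s)) ->
  (forall s, Rabs (s - t) < d0 -> ex_series (fun i => f i s)) ->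
  ex_series (fun i => g i t) ->
  (forall eps, 0 < eps -> exists n0 d, 0 < d /\
     forall s, Rabs (s - t) < d -> forall m, psum (fun j => Rabs (g (j + n0)%nat s)) m <= eps) ->
  derivable_pt_lim (fun s => Series (fun i => f i s)) t (Series (fun i => g i t)).
Proof.
  intros Hd0 HD HE HG HU eps He.
  destruct (HU (eps / 4)) as [n0 [d1 [Hd1 HU1]]]; [lra|].
  assert (Ht0 : Rabs (t - t) < d0) by (rewrite Rminus_diag, Rabs_R0; lra).
  destruct (derivable_pt_lim_psum f g n0 t (fun i _ => HD i t Ht0) (eps / 4)) as [d2 Hd2]; [lra|].
  set (d := Rmin d0 (Rmin d1 d2)).
  assert (Hd : 0 < d) by (repeat apply Rmin_pos; auto; apply cond_pos).
  assert (Hdd : d <= d0 /\ d <= d1 /\ d <= d2).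
  { unfold d. pose proof (Rmin_l d0 (Rmin d1 d2)). pose proof (Rmin_r d0 (Rmin d1 d2)).
    pose proof (Rmin_l d1 d2). pose proof (Rmin_r d1 d2). lra. }
  exists (mkposreal _ Hd). intros h Hh0 Hh. simpl in Hh.
  assert (Et : ex_series (fun i => f i t)) by auto.
  assert (Eth : ex_series (fun i => f i (t + h)))
    by (apply HE; replace (t + h - t) with h by ring; lra).
  rewrite (Series_split _ n0 Et), (Series_split _ n0 Eth), (Series_split _ n0 HG).
  set (Tg := Series (fun j => g (j + n0)%nat t)).
  set (T1 := Series (fun j => f (j + n0)%nat (t + h))).
  set (T0 := Series (fun j => f (j + n0)%nat t)).
  assert (HTg : Rabs Tg <= eps / 4).
  { apply Series_abs_le_of_psum; [apply (ex_series_shift (fun i => g i t)); auto|].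
    intros m. eapply Rle_trans; [apply psum_abs|]. apply HU1. rewrite Rminus_diag, Rabs_R0; lra. }
  assert (HT : Rabs ((T1 - T0) / h) <= eps / 4).
  { apply (Series_diff_quotient_le (fun j => f (j + n0)%nat) (fun j => g (j + n0)%nat) t h d).
    - split; [apply Rabs_pos_lt|]; auto; lra.
    - intros c Hc i. apply HD. lra.
    - intros c Hc m. apply HU1. lra.
    - apply (ex_series_shift (fun i => f i t)); auto.
    - apply (ex_series_shift (fun i => f i (t + h))); auto. }
  specialize (Hd2 h Hh0 ltac:(lra)). simpl in Hd2.
  set (A := (psum (fun i => f i (t + h)) n0 - psum (fun i => f i t) n0) / h
            - psum (fun i => g i t) n0) in *.
  replace ((psum (fun i => f i (t + h)) n0 + T1 - (psum (fun i => f i t) n0 + T0)) / h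
           - (psum (fun i => g i t) n0 + Tg))
    with (A + (T1 - T0) / h - Tg) by (unfold A; field; auto).
  eapply Rle_lt_trans; [apply Rabs_triang|]. rewrite Rabs_Ropp.
  eapply Rle_lt_trans; [apply Rplus_le_compat_r, Rabs_triang|]. lra.
Qed.

Lemma derivable_pt_lim_cont f x l : derivable_pt_lim f x l ->
  forall eps, 0 < eps -> exists d, 0 < d /\ forall y, Rabs (y - x) < d -> Rabs (f y - f x) < eps.
Proof.
  intros H eps He. destruct (derivable_continuous_pt f x (exist _ l H) eps He) as [d [Hd Hy]].
  exists d; split; auto. intros y Hyx. destruct (Req_dec y x) as [->|Hne].
  - rewrite Rminus_diag, Rabs_R0; auto.
  - apply (Hy y). repeat split; auto.
Qed.

(* [z] cannot cross 0 upwards: it would have to increase at a time where it is positive. *)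
Lemma stays_nonpos (z z' : R -> R) T :
  (forall t, T <= t -> derivable_pt_lim z t (z' t)) ->
  (forall t, T <= t -> 0 < z t -> z' t < 0) -> z T <= 0 -> forall t, T <= t -> z t <= 0.
Proof.
  intros HD HN H0 t1 Ht1. apply Rnot_lt_le. intros Hz1.
  set (E := fun s => T <= s <= t1 /\ z s <= 0).
  assert (Hb : bound E) by (exists t1; intros s [Hs _]; lra).
  destruct (completeness E Hb (ex_intro _ T (conj (conj (Rle_refl T) Ht1) H0))) as [ss [Hub Hlub]].
  assert (HT : T <= ss) by (apply Hub; split; auto; lra).
  assert (Hs1 : ss <= t1) by (apply Hlub; intros s [Hs _]; lra).
  assert (Hzs : z ss <= 0).
  { apply Rnot_lt_le. intros Hp.
    destruct (derivable_pt_lim_cont z ss _ (HD ss HT) (z ss / 2)) as [d [Hd Hy]]; [lra|].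
    assert (ss <= ss - d / 2); [|lra].
    apply Hlub. intros s [Hs Hs']. apply Rnot_lt_le. intros Hlt.
    assert (s <= ss) by (apply Hub; split; auto).
    assert (Hsd : Rabs (s - ss) < d) by (apply Rabs_def1; lra).
    specialize (Hy s Hsd). apply Rabs_def2 in Hy. lra. }
  assert (Hlt : ss < t1) by (destruct (Rle_lt_or_eq_dec _ _ Hs1) as [Hl|He]; [exact Hl|subst; lra]).
  destruct (MVT_cor2 z z' ss t1 Hlt) as [c [Hc1 Hc2]]; [intros c Hc; apply HD; lra|].
  assert (Hzc : 0 < z c).
  { apply Rnot_le_lt. intros Hle. assert (c <= ss) by (apply Hub; split; [lra|auto]). lra. }
  specialize (HN c ltac:(lra) Hzc). assert (z' c * (t1 - ss) < 0) by (apply Rmult_neg_pos; lra).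
  lra.
Qed.

(* [B e^(-gam (t - T))] is a supersolution. *)
Lemma exp_barrier_upper (y a h : R -> R) T B gam :
  (forall t, T <= t -> derivable_pt_lim y t (- (1 + a t) * y t + h t)) ->
  (forall t, T <= t -> 0 <= a t) ->
  (forall t, T <= t -> h t <= (a t + (1 - gam)) * (B * exp (- gam * (t - T)))) ->
  y T <= B ->
  forall t, T <= t -> y t <= B * exp (- gam * (t - T)).
Proof.
  intros HD Ha Hh H0 t Ht.
  set (w := fun t => B * exp (- gam * (t - T))).
  assert (Hw : forall t, derivable_pt_lim w t (- gam * w t)).
  { intros s. apply is_derive_Reals. unfold w. auto_derive; auto. unfold Rminus; ring. }
  enough (y t - w t <= 0) by (unfold w in *; lra).
  apply (stays_nonpos (fun t => y t - w t) (fun t => (- (1 + a t) * y t + h t) - (- gam * w t)) T);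
    auto.
  - intros s Hs. apply derivable_pt_lim_minus; auto.
  - intros s Hs Hp. specialize (Hh s Hs). specialize (Ha s Hs). fold (w s) in Hh.
    assert ((1 + a s) * (w s - y s) < 0) by (apply Rmult_pos_neg; lra). nra.
  - unfold w. rewrite Rminus_diag, Rmult_0_r, exp_0. lra.
Qed.

Lemma exp_barrier (y a h : R -> R) T B gam :
  (forall t, T <= t -> derivable_pt_lim y t (- (1 + a t) * y t + h t)) ->
  (forall t, T <= t -> 0 <= a t) ->
  (forall t, T <= t -> Rabs (h t) <= (a t + (1 - gam)) * (B * exp (- gam * (t - T)))) ->
  Rabs (y T) <= B ->
  forall t, T <= t -> Rabs (y t) <= B * exp (- gam * (t - T)).
Proof.
  intros HD Ha Hh H0 t Ht.
  assert (Hh' : forall s, T <= s -> - ((a s + (1 - gam)) * (B * exp (- gam * (s - T)))) <= h s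
                                 <= (a s + (1 - gam)) * (B * exp (- gam * (s - T))))
    by (intros s Hs; apply Rabs_le_between, Hh; auto).
  apply Rabs_le_between in H0. apply Rabs_le. split.
  - enough (- y t <= B * exp (- gam * (t - T))) by lra.
    apply (exp_barrier_upper (fun t => - y t) a (fun t => - h t)); auto.
    + intros s Hs. replace (- (1 + a s) * - y s + - h s) with (- (- (1 + a s) * y s + h s)) by ring.
      apply (derivable_pt_lim_opp y), HD; auto.
    + intros s Hs. specialize (Hh' s Hs). lra.
    + lra.
  - apply (exp_barrier_upper y a h); auto.
    + intros s Hs. specialize (Hh' s Hs). lra.
    + lra.
Qed.

Lemma poly_exp_le c0 c1 g s : 0 < c0 -> 0 <= c1 -> 0 < g -> 0 <= s ->
  (c0 + c1 * s) ^ 2 * exp (- g * s) <= (c0 + 4 * c1 / g) ^ 2 * exp (- (g / 2) * s).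
Proof.
  intros H0 H1 Hg Hs. set (K := c0 + 4 * c1 / g).
  assert (HK : 0 <= 4 * c1 / g) by (apply Rmult_le_pos; [lra|apply Rlt_le, Rinv_0_lt_compat; lra]).
  assert (Hy := exp_ineq1_le (g * s / 4)).
  assert (Hlin : c0 + c1 * s <= K * exp (g * s / 4)).
  { apply Rle_trans with (K * (1 + g * s / 4)); [|apply Rmult_le_compat_l; unfold K; lra].
    unfold K. replace ((c0 + 4 * c1 / g) * (1 + g * s / 4))
      with (c0 + c0 * (g * s / 4) + 4 * c1 / g + c1 * s) by (field; lra).
    assert (0 <= c0 * (g * s / 4)) by (apply Rmult_le_pos; [lra|]; apply Rmult_le_pos; nra).
    lra. }
  assert (Hsq : (c0 + c1 * s) ^ 2 <= K ^ 2 * exp (g * s / 2)).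
  { replace (K ^ 2 * exp (g * s / 2)) with ((K * exp (g * s / 4)) ^ 2)
      by (replace (g * s / 2) with (g * s / 4 + g * s / 4) by field; rewrite exp_plus; ring).
    apply pow_incr. nra. }
  eapply Rle_trans; [apply Rmult_le_compat_r; [apply Rlt_le, exp_pos|exact Hsq]|].
  rewrite Rmult_assoc, <- exp_plus. right. do 2 f_equal. field.
Qed.

Lemma exp_decay_on_halfline (f : R -> R) T C gam :
  0 <= T -> 0 < gam ->
  (exists Bm, forall t, 0 <= t <= T -> f t <= Bm) ->
  (forall t, T <= t -> f t <= C * exp (- gam * (t - T))) ->
  exists C', 0 < C' /\ forall t, 0 <= t -> f t <= C' * exp (- gam * t).
Proof.
  intros HT Hg [Bm HBm] Hlate.
  set (K := Rabs C + Rabs Bm + 1).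
  assert (HK : C <= K /\ Bm <= K /\ 0 < K).
  { unfold K. pose proof (Rle_abs C). pose proof (Rle_abs Bm).
    pose proof (Rabs_pos C). pose proof (Rabs_pos Bm). lra. }
  assert (HG : 0 < exp (gam * T)) by apply exp_pos.
  exists (K * exp (gam * T)). split; [apply Rmult_lt_0_compat; lra|].
  intros t Ht. replace (K * exp (gam * T) * exp (- gam * t)) with (K * exp (- gam * (t - T)))
    by (rewrite Rmult_assoc, <- exp_plus; do 2 f_equal; ring).
  destruct (Rle_dec T t) as [HtT|HtT].
  - eapply Rle_trans; [apply Hlate; auto|]. apply Rmult_le_compat_r; [apply Rlt_le, exp_pos|lra].
  - assert (1 <= exp (- gam * (t - T))).
    { rewrite <- exp_0. apply exp_le_exp. apply Rnot_le_lt in HtT.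
      assert (0 <= gam * (T - t)) by (apply Rmult_le_pos; lra). lra. }
    eapply Rle_trans; [apply HBm; lra|]. nra.
Qed.

(** * The space X *)

Lemma INR_succ_nonneg i : 0 <= INR i + 1.
Proof. pose proof (pos_INR i); lra. Qed.

Lemma inX_weighted (Mv : nat -> R) : (forall i, 0 <= Mv i) -> inX Mv ->
  ex_series (fun i => (INR i + 1) * Mv i).
Proof. intros H E. eapply ex_series_ext; [|exact E]. intros n; simpl. rewrite Rabs_pos_eq; auto.
Qed.

Lemma Series_weighted_nonneg (Mv : nat -> R) : (forall i, 0 <= Mv i) -> inX Mv ->
  0 <= Series (fun i => (INR i + 1) * Mv i).
Proof.
  intros H E. apply Series_nonneg; [|apply inX_weighted; auto].
  intros j; apply Rmult_le_pos; [apply INR_succ_nonneg|auto].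
Qed.

Lemma ex_series_of_inX (Mv : nat -> R) : inX Mv -> ex_series Mv.
Proof.
  intros E. refine (ex_series_dom _ _ (fun i => _) E). simpl.
  pose proof (pos_INR i). pose proof (Rabs_pos (Mv i)). nra.
Qed.

Lemma inX_sub (M1 M2 : nat -> R) : inX M1 -> inX M2 -> inX (fun i => M1 i - M2 i).
Proof.
  intros E1 E2.
  apply (ex_series_dom _ (fun i => (INR i + 1) * Rabs (M1 i) + (INR i + 1) * Rabs (M2 i))).
  - intros i. pose proof (INR_succ_nonneg i). pose proof (Rabs_triang (M1 i) (- M2 i)).
    rewrite Rabs_Ropp in *. rewrite Rabs_pos_eq by (apply Rmult_le_pos; [lra|apply Rabs_pos]).
    rewrite <- Rmult_plus_distr_l. apply Rmult_le_compat_l; [lra|auto].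
  - apply (ex_series_plus (fun i => (INR i + 1) * Rabs (M1 i))
                          (fun i => (INR i + 1) * Rabs (M2 i)));
      auto.
Qed.

Lemma Series_weighted_abs_nonneg (D : nat -> R) : inX D ->
  0 <= Series (fun i => (INR i + 1) * Rabs (D i)).
Proof.
  intros E. apply Series_nonneg; auto.
  intros j; apply Rmult_le_pos; [apply INR_succ_nonneg|apply Rabs_pos].
Qed.

Lemma distX_sym x1 M1 x2 M2 : distX x1 M1 x2 M2 = distX x2 M2 x1 M1.
Proof.
  unfold distX. rewrite Rabs_minus_sym. f_equal.
  apply Series_ext. intros; rewrite Rabs_minus_sym; auto.
Qed.

Lemma distX_triangle x1 M1 x2 M2 x3 M3 : inX M1 -> inX M2 -> inX M3 ->
  distX x1 M1 x3 M3 <= distX x1 M1 x2 M2 + distX x2 M2 x3 M3.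
Proof.
  intros E1 E2 E3. unfold distX.
  assert (Rabs (x1 - x3) <= Rabs (x1 - x2) + Rabs (x2 - x3))
    by (replace (x1 - x3) with ((x1 - x2) + (x2 - x3)) by ring; apply Rabs_triang).
  enough (Series (fun i => (INR i + 1) * Rabs (M1 i - M3 i)) <=
          Series (fun i => (INR i + 1) * Rabs (M1 i - M2 i) + (INR i + 1) * Rabs (M2 i - M3 i))).
  { rewrite Series_plus in * by (apply inX_sub; auto). lra. }
  apply Series_le.
  - intros n. pose proof (INR_succ_nonneg n). split; [apply Rmult_le_pos; [lra|apply Rabs_pos]|].
    rewrite <- Rmult_plus_distr_l. apply Rmult_le_compat_l; [lra|].
    replace (M1 n - M3 n) with ((M1 n - M2 n) + (M2 n - M3 n)) by ring. apply Rabs_triang.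
  - apply (ex_series_plus (fun i => (INR i + 1) * Rabs (M1 i - M2 i))
                          (fun i => (INR i + 1) * Rabs (M2 i - M3 i))); apply inX_sub; auto.
Qed.

Lemma weighted_abs_le_distX x1 (M1 : nat -> R) x2 M2 i : inX M1 -> inX M2 ->
  (INR i + 1) * Rabs (M1 i - M2 i) <= distX x1 M1 x2 M2.
Proof.
  intros E1 E2. unfold distX. pose proof (Rabs_pos (x1 - x2)).
  enough ((INR i + 1) * Rabs (M1 i - M2 i) <= Series (fun i => (INR i + 1) * Rabs (M1 i - M2 i)))
    by lra.
  apply (term_le_Series (fun i => (INR i + 1) * Rabs (M1 i - M2 i))); [|apply inX_sub; auto].
  intros j; apply Rmult_le_pos; [apply INR_succ_nonneg|apply Rabs_pos].
Qed.

Lemma abs_le_distX x1 (M1 : nat -> R) x2 M2 i : inX M1 -> inX M2 ->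
  Rabs (M1 i - M2 i) <= distX x1 M1 x2 M2.
Proof.
  intros E1 E2. eapply Rle_trans; [|apply (weighted_abs_le_distX x1 M1 x2 M2 i); auto].
  pose proof (pos_INR i). pose proof (Rabs_pos (M1 i - M2 i)). nra.
Qed.

Lemma weighted_tail_le_distX x1 (M1 : nat -> R) x2 M2 n :
  (forall i, 0 <= M1 i) -> (forall i, 0 <= M2 i) -> inX M1 -> inX M2 ->
  Series (fun j => (INR (j + n) + 1) * M1 (j + n)%nat)
  <= Series (fun j => (INR (j + n) + 1) * M2 (j + n)%nat) + distX x1 M1 x2 M2.
Proof.
  intros H1 H2 E1 E2.
  set (D := fun i => (INR i + 1) * Rabs (M1 i - M2 i)).
  assert (ED : ex_series D) by (apply inX_sub; auto).
  assert (EW2 : ex_series (fun j => (INR (j + n) + 1) * M2 (j + n)%nat))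
    by (apply (ex_series_shift (fun i => (INR i + 1) * M2 i)), inX_weighted; auto).
  assert (HD : Series (fun j => D (j + n)%nat) <= Series D).
  { apply Series_shift_le; auto.
    intros j; apply Rmult_le_pos; [apply INR_succ_nonneg|apply Rabs_pos]. }
  assert (Series (fun j => (INR (j + n) + 1) * M1 (j + n)%nat)
          <= Series (fun j => (INR (j + n) + 1) * M2 (j + n)%nat + D (j + n)%nat)).
  { apply Series_le.
    - intros j. pose proof (INR_succ_nonneg (j + n)). pose proof (H1 (j + n)%nat).
      pose proof (Rabs_triang_inv (M1 (j + n)%nat) (M2 (j + n)%nat)).
      rewrite !Rabs_pos_eq in * by auto. unfold D.
      split; [apply Rmult_le_pos; lra|]. rewrite <- Rmult_plus_distr_l.
      apply Rmult_le_compat_l; lra.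
    - apply (ex_series_plus _ (fun j => D (j + n)%nat)); auto. apply ex_series_shift; auto. }
  rewrite Series_plus in H by (auto; apply ex_series_shift; auto).
  unfold distX. fold D. pose proof (Rabs_pos (x1 - x2)). lra.
Qed.

Lemma Series_shift_weighted_le (D c : nat -> R) p : inX D ->
  (forall j, Rabs (c j) <= INR (j + p) + 1) ->
  Rabs (Series (fun j => c j * D (j + p)%nat)) <= Series (fun i => (INR i + 1) * Rabs (D i)).
Proof.
  intros E Hc.
  assert (E2 : ex_series (fun j => (INR (j + p) + 1) * Rabs (D (j + p)%nat)))
    by (apply (ex_series_shift (fun i => (INR i + 1) * Rabs (D i))); auto).
  assert (Hdom : forall j, Rabs (c j * D (j + p)%nat) <= (INR (j + p) + 1) * Rabs (D (j + p)%nat))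
    by (intros j; rewrite Rabs_mult; apply Rmult_le_compat_r; [apply Rabs_pos|auto]).
  assert (Eabs : ex_series (fun j => Rabs (c j * D (j + p)%nat))).
  { refine (ex_series_dom _ _ (fun j => _) E2). rewrite Rabs_Rabsolu; apply Hdom. }
  eapply Rle_trans; [apply Series_Rabs, Eabs|].
  eapply Rle_trans; [apply (Series_le _ _ (fun j => conj (Rabs_pos _) (Hdom j)) E2)|].
  apply (Series_shift_le (fun i => (INR i + 1) * Rabs (D i))); auto.
  intros j; apply Rmult_le_pos; [apply INR_succ_nonneg|apply Rabs_pos].
Qed.

Lemma ex_series_shift_weighted (Mv c : nat -> R) p : inX Mv ->
  (forall j, Rabs (c j) <= INR (j + p) + 1) -> ex_series (fun j => c j * Mv (j + p)%nat).
Proof.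
  intros E Hc. apply (ex_series_dom _ (fun j => (INR (j + p) + 1) * Rabs (Mv (j + p)%nat))).
  - intros j. rewrite Rabs_mult. apply Rmult_le_compat_r; [apply Rabs_pos|auto].
  - apply (ex_series_shift (fun i => (INR i + 1) * Rabs (Mv i))); auto.
Qed.

Lemma Series_shift_weighted_lipschitz (M1 M2 c : nat -> R) p x1 x2 : inX M1 -> inX M2 ->
  (forall j, Rabs (c j) <= INR (j + p) + 1) ->
  Rabs (Series (fun j => c j * M1 (j + p)%nat) - Series (fun j => c j * M2 (j + p)%nat))
  <= distX x1 M1 x2 M2.
Proof.
  intros E1 E2 Hc. rewrite <- Series_minus by (apply ex_series_shift_weighted; auto).
  rewrite (Series_ext _ (fun j => c j * (fun i => M1 i - M2 i) (j + p)%nat))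
    by (intros; simpl; ring).
  unfold distX. pose proof (Rabs_pos (x1 - x2)).
  pose proof (Series_shift_weighted_le (fun i => M1 i - M2 i) c p (inX_sub _ _ E1 E2) Hc). lra.
Qed.

Lemma reduce_M N x0 Mv j : reduce N x0 Mv (S (S (S (S (S j))))) = Mv j.
Proof. simpl. f_equal. lia. Qed.

Lemma sumM_shift_form (Mv : nat -> R) : sumM Mv = Series (fun j => 1 * Mv (j + 0)%nat).
Proof. apply Series_ext. intros n. rewrite Nat.add_0_r. ring. Qed.

Lemma sumiM_tail_shift_form N (Mv : nat -> R) :
  sumiM_tail N Mv = Series (fun j => INR (j + (N + 1)) * Mv (j + (N + 1))%nat).
Proof. apply Series_ext. intros n. rewrite Nat.add_assoc. reflexivity. Qed.

Lemma sumM_tail_shift_form N (Mv : nat -> R) :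
  sumM_tail N Mv = Series (fun j => 1 * Mv (j + N)%nat).
Proof. apply Series_ext. intros n. ring. Qed.

Lemma reduce_coord_le_distX N x1 M1 x2 M2 j : inX M1 -> inX M2 -> (j <= N + 4)%nat ->
  Rabs (reduce N x1 M1 (S j) - reduce N x2 M2 (S j)) <= distX x1 M1 x2 M2.
Proof.
  intros E1 E2 Hj.
  assert (Hone : forall p i, Rabs 1 <= INR (i + p) + 1)
    by (intros p i; rewrite Rabs_R1; pose proof (pos_INR (i + p)); lra).
  destruct j as [|[|[|[|j]]]].
  - change (Rabs (x1 - x2) <= distX x1 M1 x2 M2). unfold distX.
    pose proof (Series_weighted_abs_nonneg _ (inX_sub _ _ E1 E2)). cbv beta in *. lra.
  - change (Rabs (sumM M1 - sumM M2) <= distX x1 M1 x2 M2).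
    rewrite (sumM_shift_form M1), (sumM_shift_form M2). apply Series_shift_weighted_lipschitz; auto.
  - change (Rabs (sumiM_tail N M1 - sumiM_tail N M2) <= distX x1 M1 x2 M2).
    rewrite (sumiM_tail_shift_form N M1), (sumiM_tail_shift_form N M2).
    apply Series_shift_weighted_lipschitz; auto.
    intros i. rewrite Rabs_pos_eq by apply pos_INR. lra.
  - change (Rabs (sumM_tail N M1 - sumM_tail N M2) <= distX x1 M1 x2 M2).
    rewrite (sumM_tail_shift_form N M1), (sumM_tail_shift_form N M2).
    apply Series_shift_weighted_lipschitz; auto.
  - rewrite !reduce_M. apply abs_le_distX; auto.
Qed.

Lemma distF_le_distX N x1 M1 x2 M2 : inX M1 -> inX M2 ->
  distF N (reduce N x1 M1) (reduce N x2 M2) <= (INR N + 5) * distX x1 M1 x2 M2.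
Proof.
  intros E1 E2. unfold distF.
  eapply Rle_trans; [apply (sum_Rle _ (fun _ => distX x1 M1 x2 M2))|].
  - intros j Hj. apply reduce_coord_le_distX; auto.
  - rewrite sum_cte, S_INR, plus_INR. simpl INR. right. ring.
Qed.

Lemma sum_f_R0_term_le a n j : (forall j, 0 <= a j) -> (j <= n)%nat -> a j <= sum_f_R0 a n.
Proof.
  intros H; induction n as [|n IH]; intros Hj; [replace j with 0%nat by lia; simpl; lra|].
  simpl. destruct (Nat.eq_dec j (S n)) as [->|Hne].
  - pose proof (cond_pos_sum a n H). lra.
  - assert (a j <= sum_f_R0 a n) by (apply IH; lia). specialize (H (S n)). lra.
Qed.

Lemma Rmax0_dist_le y c : 0 <= c -> Rabs (Rmax 0 y - c) <= Rabs (y - c).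
Proof.
  intros Hc. unfold Rmax. destruct (Rle_dec 0 y); [lra|].
  rewrite (Rabs_minus_sym 0), (Rabs_minus_sym y), (Rabs_pos_eq (c - 0)), (Rabs_pos_eq (c - y)); lra.
Qed.

Lemma solution_bounded_on_compact N k r alpha x M xeq Meq T :
  is_solution_S N k r alpha x M -> inX Meq -> 0 <= T ->
  exists Bm, forall t, 0 <= t <= T -> distX (x t) (M t) xeq Meq <= Bm.
Proof.
  intros [Hpos [Hcont _]] EMe HT.
  (* extended to [y < 0] by its value at 0, as [continuity_ab_maj] wants two-sided continuity *)
  set (phi := fun y => distX (x (Rmax 0 y)) (M (Rmax 0 y)) xeq Meq).
  destruct (continuity_ab_maj phi 0 T HT) as [tm [Htm _]].
  - intros c Hc eps He. destruct (Hcont (Rmax 0 c) (Rmax_l _ _) eps He) as [d [Hd Hdd]].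
    exists d. split; auto. intros y [_ Hy]. simpl in *. unfold R_dist in *.
    unfold phi. rewrite (Rmax_right 0 c) in * by lra.
    destruct (Hpos (Rmax 0 y) (Rmax_l _ _)) as [_ [_ E1]].
    destruct (Hpos c ltac:(lra)) as [_ [_ E2]].
    assert (Hl : Rabs (Rmax 0 y - c) < d)
      by (eapply Rle_lt_trans; [apply Rmax0_dist_le; lra|exact Hy]).
    specialize (Hdd (Rmax 0 y) (Rmax_l _ _) Hl).
    pose proof (distX_triangle (x (Rmax 0 y)) (M (Rmax 0 y)) (x c) (M c) xeq Meq E1 E2 EMe) as T1.
    pose proof (distX_triangle (x c) (M c) (x (Rmax 0 y)) (M (Rmax 0 y)) xeq Meq E2 E1 EMe) as T2.
    rewrite (distX_sym (x c) (M c) (x (Rmax 0 y))) in T2. apply Rabs_def1; lra.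
  - exists (phi tm). intros t Ht. specialize (Htm t Ht). unfold phi in Htm.
    rewrite Rmax_right in Htm by lra. exact Htm.
Qed.

(** * The reduced system *)

Lemma rhs_M_weighted_bound k r x0 (Mv : nat -> R) i c : 0 < k -> (forall j, 0 <= Mv j) ->
  0 <= c <= INR (S i) + 1 ->
  Rabs (c * rhs_M k r x0 Mv (S i))
  <= 2 * (k * Rabs x0 + 1) * ((INR i + 1) * Mv i + (INR (S i) + 1) * Mv (S i)).
Proof.
  intros Hk HM Hc. simpl rhs_M. rewrite S_INR in *.
  pose proof (HM i). pose proof (HM (S i)). pose proof (pos_INR i).
  assert (Hkx : 0 <= k * Rabs x0) by (apply Rmult_le_pos; [lra|apply Rabs_pos]).
  assert (Hr : Rabs (k * x0 * Mv i - k * x0 * Mv (S i) - Mv (S i))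
               <= k * Rabs x0 * Mv i + (k * Rabs x0 + 1) * Mv (S i)).
  { unfold Rminus. eapply Rle_trans; [apply Rabs_triang|]. rewrite Rabs_Ropp.
    eapply Rle_trans; [apply Rplus_le_compat_r, Rabs_triang|]. rewrite Rabs_Ropp, !Rabs_mult.
    rewrite (Rabs_pos_eq k), (Rabs_pos_eq (Mv i)), (Rabs_pos_eq (Mv (S i))) by lra. lra. }
  rewrite Rabs_mult, (Rabs_pos_eq c) by lra.
  eapply Rle_trans; [apply Rmult_le_compat_l; [lra|exact Hr]|].
  assert (c * Mv i <= 2 * (INR i + 1) * Mv i) by (apply Rmult_le_compat_r; lra).
  assert (c * Mv (S i) <= (INR i + 1 + 1) * Mv (S i)) by (apply Rmult_le_compat_r; lra).
  assert (0 <= (INR i + 1 + 1) * Mv (S i)) by (apply Rmult_le_pos; lra).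
  assert (0 <= (INR i + 1) * Mv i) by (apply Rmult_le_pos; lra).
  nra.
Qed.

Lemma Series_rhs_M k r x0 (Mv : nat -> R) : inX Mv ->
  Series (fun j => rhs_M k r x0 Mv j) = r - sumM Mv.
Proof.
  intros E. pose proof (ex_series_of_inX Mv E) as EM.
  apply Series_of_lim_psum, is_lim_seq_incr_1.
  apply (is_lim_seq_ext (fun m => r - k * x0 * Mv m - psum Mv (S m))).
  { intros m. induction m as [|m IH]; [simpl; ring|].
    change (psum (fun j => rhs_M k r x0 Mv j) (S (S m)))
      with (psum (fun j => rhs_M k r x0 Mv j) (S m) + rhs_M k r x0 Mv (S m)).
    rewrite <- IH. simpl. ring. }
  replace (r - sumM Mv) with (r - k * x0 * 0 - sumM Mv) by ring.
  apply is_lim_seq_minus'; [apply is_lim_seq_minus'; [apply is_lim_seq_const|]|].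
  - apply is_lim_seq_mult'; [apply is_lim_seq_const|apply ex_series_lim_0; auto].
  - apply (is_lim_seq_incr_1 (psum Mv)), is_lim_psum; auto.
Qed.

Lemma Series_rhs_M_tail N k r x0 (Mv : nat -> R) : (1 <= N)%nat -> inX Mv ->
  Series (fun j => rhs_M k r x0 Mv (j + N)%nat) = k * x0 * Mv (N - 1)%nat - sumM_tail N Mv.
Proof.
  intros HN E. pose proof (ex_series_of_inX Mv E) as EM.
  destruct N as [|N']; [lia|]. replace (S N' - 1)%nat with N' by lia.
  apply Series_of_lim_psum.
  apply (is_lim_seq_ext (fun m => k * x0 * Mv N' - k * x0 * Mv (m + N')%nat
                                  - psum (fun j => Mv (j + S N')%nat) m)).
  { intros m. induction m as [|m IH]; [simpl; ring|]. simpl. rewrite <- IH.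
    replace (m + S N')%nat with (S (m + N')) by lia. simpl. ring. }
  replace (k * x0 * Mv N' - sumM_tail (S N') Mv)
    with (k * x0 * Mv N' - k * x0 * 0 - Series (fun j => Mv (j + S N')%nat))
    by (unfold sumM_tail; ring).
  apply is_lim_seq_minus'; [apply is_lim_seq_minus'; [apply is_lim_seq_const|]|].
  - apply is_lim_seq_mult'; [apply is_lim_seq_const|].
    apply (is_lim_seq_incr_n Mv N'), ex_series_lim_0; auto.
  - apply is_lim_psum, ex_series_shift; auto.
Qed.

Lemma Series_weighted_rhs_M_tail N k r x0 (Mv : nat -> R) : inX Mv ->
  Series (fun j => INR (j + (N + 1)) * rhs_M k r x0 Mv (j + (N + 1))%nat)
  = - sumiM_tail N Mv + k * x0 * sumM_tail N Mv + INR N * k * x0 * Mv N.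
Proof.
  intros E. pose proof (ex_series_of_inX Mv E) as EM.
  assert (EW : ex_series (fun i => (INR i + 1) * Mv i)).
  { apply (ex_series_dom _ (fun i => (INR i + 1) * Rabs (Mv i))); auto.
    intros i. rewrite Rabs_mult, (Rabs_pos_eq (INR i + 1)) by apply INR_succ_nonneg. lra. }
  assert (Hw : sumM_tail N Mv = Mv N + Series (fun j => Mv (j + S N)%nat)).
  { unfold sumM_tail. rewrite Series_incr_1 by (apply ex_series_shift; auto). simpl.
    f_equal. apply Series_ext; intros; f_equal; lia. }
  (* summation by parts; the boundary term [(m + N + 1) M_(m+N)] vanishes since [Mv] is in X *)
  rewrite Hw. apply Series_of_lim_psum.
  apply (is_lim_seq_ext (fun m => k * x0 * ((INR N + 1) * Mv N + psum (fun j => Mv (j + S N)%nat) m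
                                            - (INR (m + N) + 1) * Mv (m + N)%nat)
                                  - psum (fun j => INR (j + N + 1) * Mv (j + N + 1)%nat) m)).
  { intros m. induction m as [|m IH]; [simpl; ring|]. simpl psum. rewrite <- IH.
    replace (m + (N + 1))%nat with (S (m + N)) by lia.
    replace (m + S N)%nat with (S (m + N)) by lia.
    replace (m + N + 1)%nat with (S (m + N)) by lia. replace (S m + N)%nat with (S (m + N)) by lia.
    simpl rhs_M. rewrite !S_INR. ring. }
  unfold sumiM_tail.
  replace (- Series (fun j => INR (j + N + 1) * Mv (j + N + 1)%nat)
           + k * x0 * (Mv N + Series (fun j => Mv (j + S N)%nat)) + INR N * k * x0 * Mv N)
    with (k * x0 * ((INR N + 1) * Mv N + Series (fun j => Mv (j + S N)%nat) - 0)
          - Series (fun j => INR (j + N + 1) * Mv (j + N + 1)%nat)) by ring.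
  apply is_lim_seq_minus'; [apply is_lim_seq_mult'; [apply is_lim_seq_const|]|].
  - apply is_lim_seq_minus'; [apply is_lim_seq_plus'; [apply is_lim_seq_const|]|].
    + apply is_lim_psum, ex_series_shift; auto.
    + apply (is_lim_seq_incr_n (fun i => (INR i + 1) * Mv i) N), ex_series_lim_0; auto.
  - apply is_lim_psum.
    apply (ex_series_dom _ (fun j => (INR (j + (N + 1)) + 1) * Rabs (Mv (j + (N + 1))%nat))).
    + intros j. replace (j + N + 1)%nat with (j + (N + 1))%nat by lia.
      rewrite Rabs_mult, Rabs_pos_eq by apply pos_INR.
      apply Rmult_le_compat_r; [apply Rabs_pos|lra].
    + apply (ex_series_shift (fun i => (INR i + 1) * Rabs (Mv i))); auto.
Qed.

Section Solution.

Variables (N : nat) (k r alpha : R) (x : R -> R) (M : R -> nat -> R).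
Hypothesis Hk : 0 < k.
Hypothesis HS : is_solution_S N k r alpha x M.

Lemma solution_nonneg s i : 0 <= s -> 0 <= M s i.
Proof. intros Hs. destruct HS as [Hpos _]. apply (Hpos s Hs). Qed.

Lemma solution_inX s : 0 <= s -> inX (M s).
Proof. intros Hs. destruct HS as [Hpos _]. apply (Hpos s Hs). Qed.

Lemma solution_weighted s : 0 <= s -> ex_series (fun i => (INR i + 1) * M s i).
Proof.
  intros Hs. apply inX_weighted; [intros; apply solution_nonneg|apply solution_inX]; auto.
Qed.

Lemma solution_weighted_tail_unif t : 0 <= t -> forall eta, 0 < eta ->
  exists n1 d, 0 < d /\ forall n, (n1 <= n)%nat -> forall s, 0 <= s -> Rabs (s - t) < d ->
    Series (fun j => (INR (j + n) + 1) * M s (j + n)%nat) <= eta.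
Proof.
  intros Ht eta He. destruct HS as [_ [Hcont _]].
  destruct (Series_tail_small _ (solution_weighted t Ht) (eta / 2)) as [n1 Hn1]; [lra|].
  destruct (Hcont t Ht (eta / 2)) as [d [Hd Hds]]; [lra|].
  exists n1, d. split; auto. intros n Hn s Hs Hst.
  specialize (Hds s Hs Hst). specialize (Hn1 n Hn). apply Rabs_def2 in Hn1.
  pose proof (weighted_tail_le_distX (x s) (M s) (x t) (M t) n
                (fun i => solution_nonneg s i Hs) (fun i => solution_nonneg t i Ht)
                (solution_inX s Hs) (solution_inX t Ht)).
  lra.
Qed.

Lemma solution_rhs_bound c p s j : 0 <= s -> (forall i, 0 <= c i <= INR i + 1) ->
  Rabs (c (S j + p)%nat * rhs_M k r (x s) (M s) (S j + p)%nat)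
  <= 2 * (k * Rabs (x s) + 1)
     * ((INR (j + p) + 1) * M s (j + p)%nat + (INR (S (j + p)) + 1) * M s (S (j + p))).
Proof.
  intros Hs Hc. replace (S j + p)%nat with (S (j + p)) by lia.
  apply rhs_M_weighted_bound; auto. intros; apply solution_nonneg; auto.
Qed.

Lemma solution_rhs_tail_unif c p t : 0 < t -> (forall i, 0 <= c i <= INR i + 1) ->
  forall eps, 0 < eps -> exists n0 d, 0 < d /\ forall s, Rabs (s - t) < d -> forall m,
    psum (fun j => Rabs (c (j + n0 + p)%nat * rhs_M k r (x s) (M s) (j + n0 + p)%nat)) m <= eps.
Proof.
  intros Ht Hc eps He. pose proof HS as [_ [_ [Hdx _]]].
  set (W := fun s i => (INR i + 1) * M s i).
  set (K := 2 * (k * (Rabs (x t) + 1) + 1)).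
  assert (HK : 0 < K) by (unfold K; pose proof (Rabs_pos (x t)); nra).
  destruct (solution_weighted_tail_unif t ltac:(lra) (eps / (2 * K))) as [n1 [d [Hd Htl]]].
  { apply Rdiv_lt_0_compat; lra. }
  destruct (derivable_pt_lim_cont x t _ (proj1 (is_derive_Reals _ _ _) (Hdx t Ht)) 1 ltac:(lra))
    as [d' [Hd' Hx']].
  exists (S n1), (Rmin d (Rmin d' t)). split; [repeat apply Rmin_pos; auto|].
  intros s Hs m.
  pose proof (Rmin_l d (Rmin d' t)). pose proof (Rmin_r d (Rmin d' t)).
  pose proof (Rmin_l d' t). pose proof (Rmin_r d' t).
  assert (Hs0 : 0 <= s).
  { assert (Hst : Rabs (s - t) < t) by lra. apply Rabs_def2 in Hst. lra. }
  assert (HxK : 2 * (k * Rabs (x s) + 1) <= K).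
  { specialize (Hx' s ltac:(lra)). pose proof (Rabs_triang_inv (x s) (x t)).
    unfold K. apply Rmult_le_compat_l; [lra|]. apply Rplus_le_compat_r, Rmult_le_compat_l; lra. }
  assert (Htail : forall q, (n1 <= q)%nat -> psum (fun j => W s (j + q)%nat) m <= eps / (2 * K)).
  { intros q Hq. eapply Rle_trans; [|apply (Htl q Hq s Hs0 ltac:(lra))].
    apply (psum_le_Series (fun j => W s (j + q)%nat)).
    - intros j. apply Rmult_le_pos; [apply INR_succ_nonneg|].
      apply solution_nonneg; auto.
    - apply (ex_series_shift (W s)), solution_weighted; auto. }
  eapply Rle_trans.
  { apply (psum_le _ (fun j => K * (W s (j + (n1 + p))%nat + W s (j + S (n1 + p))%nat))).
    intros j _. replace (j + S n1)%nat with (S j + n1)%nat by lia.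
    replace (S j + n1 + p)%nat with (S (j + n1) + p)%nat by lia.
    eapply Rle_trans; [apply solution_rhs_bound; auto|].
    replace (j + n1 + p)%nat with (j + (n1 + p))%nat by lia.
    replace (S (j + (n1 + p))) with (j + S (n1 + p))%nat by lia.
    apply Rmult_le_compat_r; [|exact HxK].
    pose proof (INR_succ_nonneg (j + (n1 + p))). pose proof (INR_succ_nonneg (j + S (n1 + p))).
    pose proof (solution_nonneg s (j + (n1 + p)) Hs0).
    pose proof (solution_nonneg s (j + S (n1 + p)) Hs0).
    unfold W. nra. }
  rewrite psum_scal, psum_plus.
  pose proof (Htail (n1 + p)%nat ltac:(lia)). pose proof (Htail (S (n1 + p)) ltac:(lia)).
  replace eps with (K * (eps / (2 * K) + eps / (2 * K))) by (field; lra).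
  apply Rmult_le_compat_l; lra.
Qed.

Lemma derivable_pt_lim_weighted_Series p c t : 0 < t ->
  (forall i, 0 <= c i <= INR i + 1) ->
  derivable_pt_lim (fun s => Series (fun j => c (j + p)%nat * M s (j + p)%nat)) t
    (Series (fun j => c (j + p)%nat * rhs_M k r (x t) (M t) (j + p)%nat)).
Proof.
  intros Ht Hc. pose proof HS as [_ [_ [_ HdM]]].
  set (W := fun s i => (INR i + 1) * M s i).
  apply (derivable_pt_lim_Series (fun j s => c (j + p)%nat * M s (j + p)%nat)
           (fun j s => c (j + p)%nat * rhs_M k r (x s) (M s) (j + p)%nat) t t); auto.
  - intros i s Hs. apply Rabs_def2 in Hs.
    apply (derivable_pt_lim_scal (fun s => M s (i + p)%nat)), is_derive_Reals, HdM. lra.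
  - intros s Hs. apply Rabs_def2 in Hs.
    apply (ex_series_dom _ (fun j => W s (j + p)%nat)).
    + intros j. rewrite Rabs_mult, !Rabs_pos_eq by (try apply solution_nonneg; try apply Hc; lra).
      apply Rmult_le_compat_r; [apply solution_nonneg; lra|apply Hc].
    + apply (ex_series_shift (W s)), solution_weighted. lra.
  - apply ex_series_incr_1.
    apply (ex_series_dom _
             (fun j => 2 * (k * Rabs (x t) + 1) * (W t (j + p)%nat + W t (j + S p)%nat))).
    + intros j. replace (j + S p)%nat with (S (j + p)) by lia. apply solution_rhs_bound; auto; lra.
    + apply (ex_series_scal_l (2 * (k * Rabs (x t) + 1))
                              (fun j => W t (j + p)%nat + W t (j + S p)%nat)).
      apply (ex_series_plus (fun j => W t (j + p)%nat) (fun j => W t (j + S p)%nat));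
        apply (ex_series_shift (W t)), solution_weighted; lra.
  - apply solution_rhs_tail_unif; auto.
Qed.

Lemma sumM_derive t : 0 < t -> derivable_pt_lim (fun s => sumM (M s)) t (r - sumM (M t)).
Proof.
  intros Ht. rewrite <- (Series_rhs_M k r (x t)) by (apply solution_inX; lra).
  rewrite (Series_ext _ (fun j => 1 * rhs_M k r (x t) (M t) (j + 0)%nat))
    by (intros; rewrite Nat.add_0_r; ring).
  apply (derivable_pt_lim_ext (fun s => Series (fun j => 1 * M s (j + 0)%nat))).
  { intros s. symmetry. apply sumM_shift_form. }
  apply (derivable_pt_lim_weighted_Series 0 (fun _ => 1)); auto.
  intros i; pose proof (pos_INR i); lra.
Qed.

Lemma sumiM_tail_derive t : 0 < t ->
  derivable_pt_lim (fun s => sumiM_tail N (M s)) t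
    (- sumiM_tail N (M t) + k * x t * sumM_tail N (M t) + INR N * k * x t * M t N).
Proof.
  intros Ht. rewrite <- (Series_weighted_rhs_M_tail N k r) by (apply solution_inX; lra).
  apply (derivable_pt_lim_ext
           (fun s => Series (fun j => INR (j + (N + 1)) * M s (j + (N + 1))%nat))).
  { intros s. symmetry. apply sumiM_tail_shift_form. }
  apply (derivable_pt_lim_weighted_Series (N + 1) INR); auto.
  intros i; pose proof (pos_INR i); lra.
Qed.

Lemma sumM_tail_derive t : (1 <= N)%nat -> 0 < t ->
  derivable_pt_lim (fun s => sumM_tail N (M s)) t (k * x t * M t (N - 1)%nat - sumM_tail N (M t)).
Proof.
  intros HN Ht. rewrite <- (Series_rhs_M_tail N k r) by (auto; apply solution_inX; lra).
  rewrite (Series_ext _ (fun j => 1 * rhs_M k r (x t) (M t) (j + N)%nat)) by (intros; ring).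
  apply (derivable_pt_lim_ext (fun s => Series (fun j => 1 * M s (j + N)%nat))).
  { intros s. symmetry. apply sumM_tail_shift_form. }
  apply (derivable_pt_lim_weighted_Series N (fun _ => 1)); auto.
  intros i; pose proof (pos_INR i); lra.
Qed.

Lemma reduce_derive t j : (1 <= N)%nat -> 0 < t -> in_coords N j ->
  derivable_pt_lim (fun s => reduce N (x s) (M s) j) t (Fvec N k r alpha (reduce N (x t) (M t)) j).
Proof.
  intros HN Ht Hj. pose proof HS as [_ [_ [Hdx HdM]]].
  assert (HN5 : reduce N (x t) (M t) (N + 5)%nat = M t N)
    by (replace (N + 5)%nat with (S (S (S (S (S N))))) by lia; apply reduce_M).
  assert (HN4 : reduce N (x t) (M t) (N + 4)%nat = M t (N - 1)%nat)
    by (replace (N + 4)%nat with (S (S (S (S (S (N - 1)))))) by lia; apply reduce_M).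
  unfold in_coords in Hj. destruct j as [|[|[|[|[|[|j]]]]]]; try lia.
  - replace (Fvec N k r alpha (reduce N (x t) (M t)) 1) with (rhs_x N k alpha (x t) (M t))
      by (unfold rhs_x; simpl; ring).
    apply is_derive_Reals, Hdx; auto.
  - apply sumM_derive; auto.
  - change (Fvec N k r alpha (reduce N (x t) (M t)) 3) with
      (- sumiM_tail N (M t) + k * x t * sumM_tail N (M t)
       + INR N * k * x t * reduce N (x t) (M t) (N + 5)%nat).
    rewrite HN5. apply sumiM_tail_derive; auto.
  - change (Fvec N k r alpha (reduce N (x t) (M t)) 4) with
      (- sumM_tail N (M t) + k * x t * reduce N (x t) (M t) (N + 4)%nat).
    rewrite HN4. replace (- sumM_tail N (M t) + k * x t * M t (N - 1)%nat)
      with (k * x t * M t (N - 1)%nat - sumM_tail N (M t)) by ring.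
    apply sumM_tail_derive; auto.
  - replace (Fvec N k r alpha (reduce N (x t) (M t)) 5) with (rhs_M k r (x t) (M t) 0)
      by (simpl; ring).
    apply is_derive_Reals, (HdM t Ht 0%nat).
  - apply (derivable_pt_lim_ext (fun s => M s (S j))); [intros s; rewrite reduce_M; auto|].
    replace (Fvec N k r alpha (reduce N (x t) (M t)) (S (S (S (S (S (S j)))))))
      with (rhs_M k r (x t) (M t) (S j)).
    + apply is_derive_Reals, (HdM t Ht (S j)).
    + unfold Fvec. replace (S (S (S (S (S (S j))))) - 1)%nat with (S (S (S (S (S j))))) by lia.
      rewrite !reduce_M. simpl. ring.
Qed.

End Solution.

Lemma derivable_pt_lim_shift f T s l :
  derivable_pt_lim f (T + s) l -> derivable_pt_lim (fun s => f (T + s)) s l.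
Proof.
  intros H eps He. destruct (H eps He) as [d Hd]. exists d. intros h Hh Hhd.
  rewrite <- Rplus_assoc. apply Hd; auto.
Qed.

Lemma reduce_solution_F N k r alpha x M T : (1 <= N)%nat -> 0 < k ->
  is_solution_S N k r alpha x M -> 0 < T ->
  is_solution_F N k r alpha (fun s j => reduce N (x (T + s)) (M (T + s)) j).
Proof.
  intros HN Hk HS HT. split.
  - intros j Hj eps He.
    destruct (derivable_pt_lim_cont _ _ _ (reduce_derive N k r alpha x M Hk HS T j HN HT Hj) eps He)
      as [d [Hd Hy]].
    exists d. split; auto. intros t [Ht0 Ht1]. rewrite Rplus_0_r. apply Hy.
    rewrite Rabs_pos_eq; lra.
  - intros t Ht j Hj.
    apply is_derive_Reals, (derivable_pt_lim_shift (fun s => reduce N (x s) (M s) j)).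
    apply reduce_derive; auto. lra.
Qed.

(** * Decay of the components *)

Lemma equilibrium_geometric k r x0 (Mv : nat -> R) : 0 < k -> 0 <= x0 ->
  (forall i, rhs_M k r x0 Mv i = 0) ->
  forall j m, Mv (j + m)%nat = (k * x0 / (1 + k * x0)) ^ m * Mv j.
Proof.
  intros Hk Hx H j m. assert (0 <= k * x0) by (apply Rmult_le_pos; lra).
  induction m as [|m IH]; [rewrite Nat.add_0_r; simpl; ring|].
  replace (j + S m)%nat with (S (j + m)) by lia. specialize (H (S (j + m))). simpl in H.
  simpl. rewrite Rmult_assoc, <- IH. field_simplify_eq; lra.
Qed.

Lemma equilibrium_weighted_tail_le k r xeq (Meq : nat -> R) q n :
  0 < k -> 0 <= xeq -> (forall i, 0 <= Meq i) -> inX Meq ->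
  (forall i, rhs_M k r xeq Meq i = 0) -> k * xeq / (1 + k * xeq) <= q ->
  Series (fun j => (INR (j + (n + 1)) + 1) * Meq (j + (n + 1))%nat)
  <= (INR n + 2) * q ^ (n + 1) * Series (fun i => (INR i + 1) * Meq i).
Proof.
  intros Hk Hx HM E Heq Hq. set (rho := k * xeq / (1 + k * xeq)) in *.
  assert (Hrho : 0 <= rho).
  { unfold rho. assert (0 <= k * xeq) by (apply Rmult_le_pos; lra).
    apply Rmult_le_pos; [lra|apply Rlt_le, Rinv_0_lt_compat; lra]. }
  rewrite <- Series_scal_l. apply Series_le.
  - intros j. pose proof (INR_succ_nonneg (j + (n + 1))). split; [apply Rmult_le_pos; [lra|auto]|].
    rewrite (equilibrium_geometric k r xeq Meq Hk Hx Heq j (n + 1)). fold rho.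
    rewrite !plus_INR. simpl INR.
    pose proof (pos_INR j). pose proof (pos_INR n). pose proof (HM j).
    assert (rho ^ (n + 1) <= q ^ (n + 1)) by (apply pow_incr; lra).
    pose proof (pow_le rho (n + 1) Hrho).
    assert (INR j + INR n + 1 + 1 <= (INR n + 2) * (INR j + 1)) by nra.
    assert (0 <= rho ^ (n + 1) * Meq j) by (apply Rmult_le_pos; auto).
    assert (rho ^ (n + 1) * Meq j <= q ^ (n + 1) * Meq j) by (apply Rmult_le_compat_r; auto).
    apply Rle_trans with ((INR n + 2) * (INR j + 1) * (rho ^ (n + 1) * Meq j)); [nra|].
    replace ((INR n + 2) * q ^ (n + 1) * ((INR j + 1) * Meq j))
      with ((INR n + 2) * (INR j + 1) * (q ^ (n + 1) * Meq j)) by ring.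
    apply Rmult_le_compat_l; nra.
  - apply (ex_series_scal_l ((INR n + 2) * q ^ (n + 1)) (fun i => (INR i + 1) * Meq i)).
    apply inX_weighted; auto.
Qed.

Definition prev_seq (Mv : nat -> R) (i : nat) : R :=
  match i with O => 0 | S j => Mv j end.

Lemma rhs_M_sub k r x1 (M1 : nat -> R) x2 M2 i :
  rhs_M k r x1 M1 i - rhs_M k r x2 M2 i
  = - (1 + k * x1) * (M1 i - M2 i) + k * x1 * (prev_seq M1 i - prev_seq M2 i)
    + k * (x1 - x2) * (prev_seq M2 i - M2 i).
Proof. destruct i; simpl; ring. Qed.

Lemma linear_forcing_le a k P X Q A B W e gam :
  0 <= a -> 0 < k -> 0 <= e -> gam <= 1 / 2 -> 4 * k * A * W <= B ->
  Rabs P <= B * e -> Rabs X <= A * e -> Rabs Q <= 2 * W ->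
  Rabs (a * P + k * X * Q) <= (a + (1 - gam)) * (B * e).
Proof.
  intros Ha Hk He Hg HB HP HX HQ.
  pose proof (Rabs_pos P). pose proof (Rabs_pos X). pose proof (Rabs_pos Q).
  eapply Rle_trans; [apply Rabs_triang|].
  rewrite (Rabs_mult a), (Rabs_mult (k * X)), (Rabs_mult k), (Rabs_pos_eq a), (Rabs_pos_eq k)
    by lra.
  assert (a * Rabs P <= a * (B * e)) by (apply Rmult_le_compat_l; auto).
  assert (k * Rabs X * Rabs Q <= k * (A * e) * (2 * W))
    by (apply Rmult_le_compat; [nra|lra|apply Rmult_le_compat_l; lra|auto]).
  assert (k * (A * e) * (2 * W) <= (1 / 2) * (B * e)).
  { replace (k * (A * e) * (2 * W)) with ((2 * (k * A * W)) * e) by ring.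
    replace ((1 / 2) * (B * e)) with (((1 / 2) * B) * e) by ring.
    apply Rmult_le_compat_r; lra. }
  assert ((1 / 2) * (B * e) <= (1 - gam) * (B * e)) by (apply Rmult_le_compat_r; lra).
  lra.
Qed.

Section Decay.
Variables (N : nat) (k r alpha : R) (x : R -> R) (M : R -> nat -> R) (xeq : R) (Meq : nat -> R).
Variables (T A gam B : R).
Hypothesis Hk : 0 < k.
Hypothesis HS : is_solution_S N k r alpha x M.
Hypothesis HE : is_equilibrium_S N k r alpha xeq Meq.
Hypothesis HT : 0 < T.
Hypothesis Hgam : 0 < gam <= 1 / 2.
Hypothesis Hx : forall t, T <= t -> Rabs (x t - xeq) <= A * exp (- gam * (t - T)).
Hypothesis HB : 4 * k * A * Series (fun i => (INR i + 1) * Meq i) <= B.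

Lemma M_component_decay i :
  (forall t, T <= t -> Rabs (prev_seq (M t) i - prev_seq Meq i) <= B * exp (- gam * (t - T))) ->
  Rabs (M T i - Meq i) <= B ->
  forall t, T <= t -> Rabs (M t i - Meq i) <= B * exp (- gam * (t - T)).
Proof.
  intros Hprev H0. pose proof HS as [_ [_ [_ HdM]]].
  destruct HE as [[Hxe [HMe EMe]] [_ Heq]].
  set (W := Series (fun i => (INR i + 1) * Meq i)) in *.
  assert (HMW : forall j, 0 <= Meq j <= W).
  { intros j. split; auto. eapply Rle_trans;
      [|apply (term_le_Series (fun i => (INR i + 1) * Meq i) j); [|apply inX_weighted; auto]].
    - pose proof (pos_INR j). pose proof (HMe j). nra.
    - intros l; apply Rmult_le_pos; [apply INR_succ_nonneg|auto]. }
  assert (Hprev_eq : Rabs (prev_seq Meq i - Meq i) <= 2 * W).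
  { assert (0 <= prev_seq Meq i <= W)
      by (destruct i; simpl; [pose proof (HMW 0%nat)|apply HMW]; lra).
    pose proof (HMW i). apply Rabs_le. lra. }
  apply (exp_barrier (fun t => M t i - Meq i) (fun t => k * x t)
           (fun t => k * x t * (prev_seq (M t) i - prev_seq Meq i)
                     + k * (x t - xeq) * (prev_seq Meq i - Meq i))); auto.
  - intros t Ht. replace (- (1 + k * x t) * (M t i - Meq i) + _)
      with (rhs_M k r (x t) (M t) i - rhs_M k r xeq Meq i) by (rewrite rhs_M_sub; ring).
    apply derivable_pt_lim_minus; [apply is_derive_Reals, HdM; lra|].
    rewrite Heq. apply derivable_pt_lim_const.
  - intros t Ht. apply Rmult_le_pos; [lra|]. destruct HS as [Hpos _]. apply (Hpos t). lra.
  - intros t Ht. destruct HS as [Hpos _].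
    apply (linear_forcing_le _ _ _ _ _ A B W); auto; try lra.
    + apply Rmult_le_pos; [lra|apply (Hpos t); lra].
    + apply Rlt_le, exp_pos.
Qed.

Lemma M_uniform_decay : (forall i, Rabs (M T i - Meq i) <= B) ->
  forall i t, T <= t -> Rabs (M t i - Meq i) <= B * exp (- gam * (t - T)).
Proof.
  intros H0 i. induction i as [|i IH]; apply M_component_decay; auto.
  intros t Ht. simpl. rewrite Rminus_diag, Rabs_R0.
  apply Rmult_le_pos; [eapply Rle_trans; [apply Rabs_pos|apply (H0 0%nat)]|apply Rlt_le, exp_pos].
Qed.

End Decay.

(** * Exponential convergence in X *)

Definition tail_moment N (Mv : nat -> R) : R := sumiM_tail N Mv + sumM_tail N Mv - Mv N.

Lemma tail_moment_Series N (Mv : nat -> R) : inX Mv ->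
  tail_moment N Mv = Series (fun j => (INR (j + N + 1) + 1) * Mv (j + N + 1)%nat).
Proof.
  intros E. pose proof (ex_series_of_inX Mv E) as EM.
  assert (E1 : ex_series (fun j => INR (j + N + 1) * Mv (j + N + 1)%nat)).
  { apply (ex_series_ext (fun j => INR (j + (N + 1)) * Mv (j + (N + 1))%nat));
      [intros; rewrite Nat.add_assoc; auto|].
    apply ex_series_shift_weighted; auto. intros j. rewrite Rabs_pos_eq by apply pos_INR. lra. }
  assert (E2 : ex_series (fun j => Mv (j + N + 1)%nat)).
  { apply (ex_series_ext (fun j => Mv (j + (N + 1))%nat)); [intros; f_equal; lia|].
    apply ex_series_shift; auto. }
  unfold tail_moment, sumiM_tail, sumM_tail.
  rewrite (Series_incr_1 (fun j => Mv (j + N)%nat)) by (apply ex_series_shift; auto). simpl.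
  rewrite (Series_ext (fun k => Mv (S (k + N))) (fun j => Mv (j + N + 1)%nat))
    by (intros; f_equal; lia).
  rewrite (Series_ext (fun j => (INR (j + N + 1) + 1) * Mv (j + N + 1)%nat)
             (fun j => INR (j + N + 1) * Mv (j + N + 1)%nat + Mv (j + N + 1)%nat))
    by (intros; ring).
  rewrite Series_plus by auto. ring.
Qed.

Lemma tail_moment_sub_le N x1 M1 x2 M2 : (1 <= N)%nat ->
  Rabs (tail_moment N M1 - tail_moment N M2)
  <= Rabs (reduce N x1 M1 3 - reduce N x2 M2 3) + Rabs (reduce N x1 M1 4 - reduce N x2 M2 4)
     + Rabs (reduce N x1 M1 (N + 5) - reduce N x2 M2 (N + 5)).
Proof.
  intros HN. replace (N + 5)%nat with (S (S (S (S (S N))))) by lia. rewrite !reduce_M.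
  unfold tail_moment. simpl reduce.
  replace (sumiM_tail N M1 + sumM_tail N M1 - M1 N - (sumiM_tail N M2 + sumM_tail N M2 - M2 N))
    with ((sumiM_tail N M1 - sumiM_tail N M2) + (sumM_tail N M1 - sumM_tail N M2) + - (M1 N - M2 N))
    by ring.
  eapply Rle_trans; [apply Rabs_triang|]. rewrite Rabs_Ropp.
  apply Rplus_le_compat_r, Rabs_triang.
Qed.

Lemma tail_moment_split N (P : nat -> R) m : inX P ->
  tail_moment N P
  = psum (fun j => (INR (j + N + 1) + 1) * P (j + N + 1)%nat) m
    + Series (fun j => (INR (j + (N + m + 1)) + 1) * P (j + (N + m + 1))%nat).
Proof.
  intros E. rewrite tail_moment_Series by auto. rewrite (Series_split _ m).
  - f_equal. apply Series_ext. intros j.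
    replace (j + m + N + 1)%nat with (j + (N + m + 1))%nat by lia. reflexivity.
  - apply (ex_series_ext (fun j => (INR (j + (N + 1)) + 1) * P (j + (N + 1))%nat));
      [intros; rewrite Nat.add_assoc; auto|].
    apply ex_series_shift_weighted; auto. intros j.
    pose proof (INR_succ_nonneg (j + (N + 1))). rewrite Rabs_pos_eq; lra.
Qed.

Lemma weighted_tail_sub_le (M1 M2 : nat -> R) n :
  (forall i, 0 <= M1 i) -> (forall i, 0 <= M2 i) -> inX M1 -> inX M2 ->
  Series (fun j => (INR (j + n) + 1) * Rabs (M1 (j + n)%nat - M2 (j + n)%nat))
  <= Series (fun j => (INR (j + n) + 1) * M1 (j + n)%nat)
     + Series (fun j => (INR (j + n) + 1) * M2 (j + n)%nat).
Proof.
  intros H1 H2 E1 E2.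
  assert (Hshift : forall P, (forall i, 0 <= P i) -> inX P ->
            ex_series (fun j => (INR (j + n) + 1) * P (j + n)%nat))
    by (intros P HP E; apply (ex_series_shift (fun i => (INR i + 1) * P i)), inX_weighted; auto).
  rewrite <- Series_plus by auto. apply Series_le.
  - intros j. pose proof (INR_succ_nonneg (j + n)).
    split; [apply Rmult_le_pos; [lra|apply Rabs_pos]|].
    rewrite <- Rmult_plus_distr_l. apply Rmult_le_compat_l; [lra|].
    pose proof (Rabs_triang (M1 (j + n)%nat) (- M2 (j + n)%nat)) as Htri.
    rewrite Rabs_Ropp, (Rabs_pos_eq (M1 _)), (Rabs_pos_eq (M2 _)) in Htri by auto. exact Htri.
  - apply (ex_series_plus (fun j => (INR (j + n) + 1) * M1 (j + n)%nat)
                          (fun j => (INR (j + n) + 1) * M2 (j + n)%nat)); auto.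
Qed.

(* Splitting [distX] at [n = N + m]: the head is controlled by the uniform bound [b], the tail
   of [M] by the tail moment and finitely many [M_i], and the tail of [Meq] is geometric. *)
Lemma distX_le_split N k r xv Mv xeq Meq m a b z q :
  0 < k -> (forall i, 0 <= Mv i) -> inX Mv -> 0 <= xeq -> (forall i, 0 <= Meq i) -> inX Meq ->
  (forall i, rhs_M k r xeq Meq i = 0) -> k * xeq / (1 + k * xeq) <= q ->
  Rabs (xv - xeq) <= a -> Rabs (tail_moment N Mv - tail_moment N Meq) <= z ->
  (forall i, Rabs (Mv i - Meq i) <= b) ->
  distX xv Mv xeq Meq
  <= a + z + 2 * (INR (N + m) + 2) ^ 2 * b
     + 2 * (INR (N + m) + 2) * q ^ (N + m + 1) * Series (fun i => (INR i + 1) * Meq i).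
Proof.
  intros Hk HM EM Hxe HMe EMe Heq Hq Ha Hz Hb.
  set (n := (N + m)%nat). fold n in Hz |- *.
  set (tl := fun P : nat -> R => Series (fun j => (INR (j + (n + 1)) + 1) * P (j + (n + 1))%nat)).
  set (F := fun P : nat -> R => psum (fun j => (INR (j + N + 1) + 1) * P (j + N + 1)%nat) m).
  assert (Hb0 : 0 <= b) by (eapply Rle_trans; [apply Rabs_pos|apply (Hb 0%nat)]).
  assert (Hnm : INR m <= INR n) by (apply le_INR; unfold n; lia).
  assert (Hhead : psum (fun i => (INR i + 1) * Rabs (Mv i - Meq i)) (n + 1)
                  <= (INR n + 1) * ((INR n + 1) * b)).
  { replace (INR n + 1) with (INR (n + 1)) at 1 by (rewrite plus_INR; simpl; ring).
    apply psum_le_const. intros j Hj.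
    assert (INR j <= INR n) by (apply le_INR; lia).
    apply Rmult_le_compat; [apply INR_succ_nonneg|apply Rabs_pos|lra|auto]. }
  assert (HF : Rabs (F Meq - F Mv) <= INR m * ((INR n + 1) * b)).
  { unfold F. rewrite <- psum_minus. eapply Rle_trans; [apply psum_abs|]. apply psum_le_const.
    intros j Hj. pose proof (INR_succ_nonneg (j + N + 1)).
    rewrite <- Rmult_minus_distr_l, Rabs_mult, Rabs_minus_sym, (Rabs_pos_eq (INR _ + 1)) by lra.
    assert (INR (j + N + 1) <= INR n) by (apply le_INR; unfold n; lia).
    apply Rmult_le_compat; [lra|apply Rabs_pos|lra|auto]. }
  assert (HTE : tl Meq <= (INR n + 2) * q ^ (n + 1) * Series (fun i => (INR i + 1) * Meq i))
    by (unfold tl; apply (equilibrium_weighted_tail_le k r xeq); auto).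
  assert (HTE0 : 0 <= tl Meq).
  { apply Series_nonneg;
      [|apply (ex_series_shift (fun i => (INR i + 1) * Meq i)), inX_weighted; auto].
    intros j. apply Rmult_le_pos; [apply INR_succ_nonneg|auto]. }
  pose proof (tail_moment_split N Mv m EM) as HsM.
  pose proof (tail_moment_split N Meq m EMe) as HsE.
  fold n (F Mv) (F Meq) (tl Mv) (tl Meq) in HsM, HsE.
  pose proof (weighted_tail_sub_le Mv Meq (n + 1) HM HMe EM EMe) as Htail.
  fold (tl Mv) (tl Meq) in Htail.
  apply Rabs_le_between in HF. apply Rabs_le_between in Hz.
  unfold distX. rewrite (Series_split _ (n + 1)) by (apply inX_sub; auto).
  assert ((INR n + 1) * ((INR n + 1) * b) + INR m * ((INR n + 1) * b) <= 2 * (INR n + 2) ^ 2 * b).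
  { pose proof (pos_INR m). assert (0 <= (INR n + 1) * b) by (apply Rmult_le_pos; lra).
    assert (INR m * ((INR n + 1) * b) <= (INR n + 1) * ((INR n + 1) * b))
      by (apply Rmult_le_compat_r; lra).
    assert ((INR n + 1) * ((INR n + 1) * b) <= (INR n + 2) ^ 2 * b) by (simpl; nra).
    lra. }
  lra.
Qed.

Lemma neg_ln_pos q : 0 < q < 1 -> 0 < - ln q.
Proof. intros Hq. pose proof (ln_increasing q 1 ltac:(lra) ltac:(lra)). rewrite ln_1 in *. lra. Qed.

Lemma pow_le_exp_of_floor q g s m : 0 < q < 1 -> g * s / (- ln q) < INR m + 1 ->
  q ^ m <= exp (- ln q) * exp (- g * s).
Proof.
  intros Hq Hm. set (L := - ln q) in *.
  assert (HL : 0 < L) by (apply neg_ln_pos; auto).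
  assert (Hgs : g * s < INR m * L + L).
  { apply (Rmult_lt_reg_r (/ L)); [apply Rinv_0_lt_compat; lra|].
    replace ((INR m * L + L) * / L) with (INR m + 1) by (field; lra). exact Hm. }
  rewrite <- Rpower_pow by lra. unfold Rpower. rewrite <- exp_plus. apply exp_le_exp.
  replace (INR m * ln q) with (- (INR m * L)) by (unfold L; ring). lra.
Qed.

Lemma split_index_exists N q g s : 0 < q < 1 -> 0 < g -> 0 <= s ->
  exists m,
    (INR (N + m) + 2) ^ 2 * exp (- g * s)
      <= (INR N + 2 + 4 / (- ln q)) ^ 2 * exp (- (g / 2) * s) /\
    q ^ (N + m + 1) <= exp (- ln q) * exp (- g * s).
Proof.
  intros Hq Hg Hs. set (L := - ln q).
  assert (HL : 0 < L) by (apply neg_ln_pos; auto).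
  destruct (nfloor_ex (g * s / L)) as [m [Hm1 Hm2]].
  { apply Rmult_le_pos; [nra|apply Rlt_le, Rinv_0_lt_compat; lra]. }
  exists m. split.
  - replace (4 / L) with (4 * (g / L) / g) by (field; lra).
    eapply Rle_trans; [|apply poly_exp_le; try lra; [pose proof (pos_INR N); lra|]].
    + apply Rmult_le_compat_r; [apply Rlt_le, exp_pos|]. rewrite plus_INR.
      apply pow_incr. pose proof (pos_INR N). pose proof (pos_INR m).
      replace (g / L * s) with (g * s / L) by (field; lra). lra.
    + apply Rlt_le, Rdiv_lt_0_compat; lra.
  - replace (N + m + 1)%nat with (m + (N + 1))%nat by lia. rewrite pow_add.
    assert (q ^ (N + 1) <= 1) by (rewrite <- (pow1 (N + 1)); apply pow_incr; lra).
    pose proof (pow_le q m ltac:(lra)). pose proof (exp_pos L). pose proof (exp_pos (- g * s)).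
    pose proof (pow_le_exp_of_floor q g s m Hq Hm2) as Hqm. fold L in Hqm. nra.
Qed.

Lemma distX_decay_after N k r alpha x M xeq Meq T A Az B g :
  0 < k -> is_solution_S N k r alpha x M -> is_equilibrium_S N k r alpha xeq Meq ->
  0 <= T -> 0 < g -> 0 <= A -> 0 <= Az -> 0 <= B ->
  (forall t, T <= t -> Rabs (x t - xeq) <= A * exp (- g * (t - T))) ->
  (forall t, T <= t ->
     Rabs (tail_moment N (M t) - tail_moment N Meq) <= Az * exp (- g * (t - T))) ->
  (forall i t, T <= t -> Rabs (M t i - Meq i) <= B * exp (- g * (t - T))) ->
  exists C1, forall t, T <= t -> distX (x t) (M t) xeq Meq <= C1 * exp (- (g / 2) * (t - T)).
Proof.
  intros Hk HS HE HT Hg HA HAz HB Hx Hz HM.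
  destruct HE as [[Hxe [HMe EMe]] [_ Heq]].
  set (W := Series (fun i => (INR i + 1) * Meq i)).
  assert (HW : 0 <= W) by (apply Series_weighted_nonneg; auto).
  set (rho := k * xeq / (1 + k * xeq)).
  assert (Hrho : rho < 1).
  { assert (0 <= k * xeq) by (apply Rmult_le_pos; lra).
    unfold rho, Rdiv. apply (Rmult_lt_reg_r (1 + k * xeq)); [lra|].
    rewrite Rmult_assoc, Rinv_l by lra. lra. }
  set (q := Rmax rho (1 / 2)).
  assert (Hq : 0 < q < 1)
    by (unfold q; split; [pose proof (Rmax_r rho (1 / 2)); lra|apply Rmax_lub_lt; lra]).
  set (K := INR N + 2 + 4 / (- ln q)). set (G := exp (- ln q)).
  assert (HG : 0 < G) by apply exp_pos.
  assert (HC : 0 <= 2 * B + 2 * W * G) by (assert (0 <= W * G) by (apply Rmult_le_pos; lra); lra).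
  exists (A + Az + (2 * B + 2 * W * G) * K ^ 2). intros t Ht.
  set (s := t - T). set (E := exp (- g * s)). set (E2 := exp (- (g / 2) * s)).
  assert (HE : 0 < E) by apply exp_pos.
  assert (HEE2 : E <= E2) by (apply exp_le_exp; unfold s; nra).
  destruct (split_index_exists N q g s Hq Hg ltac:(unfold s; lra)) as [m [Hpoly Hgeom]].
  fold K G E E2 in Hpoly, Hgeom.
  destruct HS as [Hpos _]. destruct (Hpos t ltac:(lra)) as [_ [HMt EMt]].
  pose proof (distX_le_split N k r (x t) (M t) xeq Meq m (A * E) (B * E) (Az * E) q
                Hk HMt EMt Hxe HMe EMe Heq (Rmax_l _ _) (Hx t Ht) (Hz t Ht) (fun i => HM i t Ht))
    as Hsplit.
  fold W in Hsplit. set (n2 := INR (N + m) + 2) in *.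
  assert (Hn2 : 1 <= n2) by (unfold n2; pose proof (pos_INR (N + m)); lra).
  assert (Htail : 2 * n2 * q ^ (N + m + 1) * W <= 2 * W * G * (n2 ^ 2 * E)).
  { pose proof (pow_le q (N + m + 1) ltac:(lra)).
    assert (n2 * q ^ (N + m + 1) <= n2 ^ 2 * (G * E)).
    { apply Rle_trans with (n2 * (G * E)); [apply Rmult_le_compat_l; lra|].
      apply Rmult_le_compat_r; [nra|simpl; nra]. }
    nra. }
  assert (A * E + Az * E <= (A + Az) * E2) by nra.
  assert ((2 * B + 2 * W * G) * (n2 ^ 2 * E) <= (2 * B + 2 * W * G) * (K ^ 2 * E2))
    by (apply Rmult_le_compat_l; lra).
  nra.
Qed.

(* Stability applies to [reduce] of the solution restarted at a time [T] after which it stays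
   within [dl / (N + 5)] of the equilibrium in X. *)
Lemma reduce_decay N k r alpha xeq Meq x M :
  (1 <= N)%nat -> 0 < k -> is_equilibrium_S N k r alpha xeq Meq ->
  loc_exp_stable N k r alpha (reduce N xeq Meq) -> is_solution_S N k r alpha x M ->
  (forall eps, 0 < eps -> exists T, forall t, T <= t -> distX (x t) (M t) xeq Meq < eps) ->
  exists T A g, 0 < T /\ 0 <= A /\ 0 < g <= 1 / 2 /\
    forall t j, T <= t -> (j <= N + 4)%nat ->
      Rabs (reduce N (x t) (M t) (S j) - reduce N xeq Meq (S j)) <= A * exp (- g * (t - T)).
Proof.
  intros HN Hk HE Hst HS Hconv.
  destruct HE as [[_ [_ EMe]] _].
  destruct Hst as [_ [dl [Cs [gm [Hdl [HCs [Hgm [_ Hbd]]]]]]]].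
  assert (HN5 : 0 < INR N + 5) by (pose proof (pos_INR N); lra).
  destruct (Hconv (dl / (INR N + 5) / 2)) as [T0 HT0].
  { apply Rdiv_lt_0_compat; [apply Rdiv_lt_0_compat|]; lra. }
  set (T := Rmax T0 1).
  assert (HT : 0 < T) by (unfold T; pose proof (Rmax_r T0 1); lra).
  set (U := fun s j => reduce N (x (T + s)) (M (T + s)) j).
  assert (HU : is_solution_F N k r alpha U) by (apply reduce_solution_F; auto).
  assert (HU0 : distF N (U 0) (reduce N xeq Meq) < dl).
  { unfold U. rewrite Rplus_0_r.
    eapply Rle_lt_trans;
      [apply distF_le_distX; auto; apply (solution_inX N k r alpha x M HS); lra|].
    specialize (HT0 T (Rmax_l _ _)).
    apply Rlt_le_trans with ((INR N + 5) * (dl / (INR N + 5) / 2));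
      [apply Rmult_lt_compat_l; auto|].
    replace ((INR N + 5) * (dl / (INR N + 5) / 2)) with (dl / 2) by (field; lra). lra. }
  assert (HU0' : 0 <= distF N (U 0) (reduce N xeq Meq))
    by (apply cond_pos_sum; intros; apply Rabs_pos).
  exists T, (Cs * dl), (Rmin gm (1 / 2)).
  split; [auto|split; [nra|split; [split; [apply Rmin_pos; lra|apply Rmin_r]|]]].
  intros t j Ht Hj.
  assert (Hexp : exp (- gm * (t - T)) <= exp (- Rmin gm (1 / 2) * (t - T)))
    by (apply exp_le_exp; pose proof (Rmin_l gm (1 / 2)); nra).
  eapply Rle_trans; [|eapply Rle_trans; [apply (Hbd U HU HU0 (t - T)); lra|]].
  - replace t with (T + (t - T)) at 1 2 by ring.
    apply (sum_f_R0_term_le (fun j => Rabs (U (t - T) (S j) - reduce N xeq Meq (S j))));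
      auto; intros; apply Rabs_pos.
  - replace (Cs * dl * exp (- Rmin gm (1 / 2) * (t - T)))
      with (Cs * exp (- Rmin gm (1 / 2) * (t - T)) * dl) by ring.
    apply Rmult_le_compat; [pose proof (exp_pos (- gm * (t - T))); nra|auto|nra|lra].
Qed.

Lemma distX_decay_of_reduce_decay N k r alpha x M xeq Meq T A g :
  (1 <= N)%nat -> 0 < k -> is_solution_S N k r alpha x M -> is_equilibrium_S N k r alpha xeq Meq ->
  0 < T -> 0 <= A -> 0 < g <= 1 / 2 ->
  (forall t j, T <= t -> (j <= N + 4)%nat ->
     Rabs (reduce N (x t) (M t) (S j) - reduce N xeq Meq (S j)) <= A * exp (- g * (t - T))) ->
  exists C1, forall t, T <= t -> distX (x t) (M t) xeq Meq <= C1 * exp (- (g / 2) * (t - T)).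
Proof.
  intros HN Hk HS HE HT HA Hg Hcoord.
  set (B := distX (x T) (M T) xeq Meq + 4 * k * A * Series (fun i => (INR i + 1) * Meq i)).
  assert (HEinX : inX Meq) by apply HE.
  assert (HTinX : inX (M T)) by (apply (solution_inX N k r alpha x M HS); lra).
  assert (HkAW : 0 <= 4 * k * A * Series (fun i => (INR i + 1) * Meq i)).
  { assert (0 <= Series (fun i => (INR i + 1) * Meq i)) by (apply Series_weighted_nonneg; apply HE).
    repeat apply Rmult_le_pos; lra. }
  assert (HdT : 0 <= distX (x T) (M T) xeq Meq)
    by (eapply Rle_trans; [apply Rabs_pos|apply (abs_le_distX _ _ _ _ 0 HTinX HEinX)]).
  assert (HM0 : forall i, Rabs (M T i - Meq i) <= B).
  { intros i. unfold B. pose proof (abs_le_distX (x T) (M T) xeq Meq i HTinX HEinX). lra. }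
  assert (HM := M_uniform_decay N k r alpha x M xeq Meq T A g B Hk HS HE HT Hg
                  (fun t Ht => Hcoord t 0%nat Ht ltac:(lia)) (ltac:(unfold B; lra)) HM0).
  assert (HZ : forall t, T <= t ->
    Rabs (tail_moment N (M t) - tail_moment N Meq) <= 3 * A * exp (- g * (t - T))).
  { intros t Ht. eapply Rle_trans; [apply (tail_moment_sub_le N (x t) (M t) xeq Meq HN)|].
    pose proof (Hcoord t 2%nat Ht ltac:(lia)). pose proof (Hcoord t 3%nat Ht ltac:(lia)).
    pose proof (Hcoord t (N + 4)%nat Ht ltac:(lia)).
    replace (S (N + 4)) with (N + 5)%nat in * by lia.
    lra. }
  destruct (distX_decay_after N k r alpha x M xeq Meq T A (3 * A) B g Hk HS HE ltac:(lra)
              ltac:(lra) HA ltac:(lra) ltac:(unfold B; lra)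
              (fun t Ht => Hcoord t 0%nat Ht ltac:(lia)) HZ HM) as [C1 HC1].
  exists C1; auto.
Qed.

Theorem theorem4p2 (N : nat) (k r alpha : R) (xeq : R) (Meq : nat -> R) :
  (1 <= N)%nat -> 0 < k -> 0 < r -> 0 < alpha ->
  (* alpha / r < mu_star = F~_N(y_star), y_star the unique zero of p_N in ]0,1[ *)
  (exists ystar, 0 < ystar < 1 /\ pN N ystar = 0 /\
     (forall y, 0 < y < 1 -> pN N y = 0 -> y = ystar) /\
     alpha / r < FtildeN N ystar) ->
  is_equilibrium_S N k r alpha xeq Meq ->
  loc_exp_stable N k r alpha (reduce N xeq Meq) ->
  forall (x : R -> R) (M : R -> nat -> R),
    is_solution_S N k r alpha x M ->
    (forall eps, 0 < eps -> exists T, forall t, T <= t ->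
        distX (x t) (M t) xeq Meq < eps) ->
    exists C gamma, 0 < C /\ 0 < gamma /\
      forall t, 0 <= t -> distX (x t) (M t) xeq Meq <= C * exp (- gamma * t).
Proof.
  intros HN Hk _ _ _ HE Hst x M HS Hconv.
  destruct (reduce_decay N k r alpha xeq Meq x M HN Hk HE Hst HS Hconv)
    as [T [A [g [HT [HA [Hg Hcoord]]]]]].
  destruct (distX_decay_of_reduce_decay N k r alpha x M xeq Meq T A g HN Hk HS HE HT HA Hg Hcoord)
    as [C1 HC1].
  destruct (exp_decay_on_halfline (fun t => distX (x t) (M t) xeq Meq) T C1 (g / 2)
              ltac:(lra) ltac:(lra)
              (solution_bounded_on_compact N k r alpha x M xeq Meq T HS ltac:(apply HE) ltac:(lra))
              HC1)
    as [C [HC Hdecay]].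
  exists C, (g / 2). repeat split; auto; lra.
Qed.
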